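(* Let $\mathcal{I}$ be an ideal. The following are equivalent: (a) $\mathcal{I}$ is unboring; (b) there is a Hausdorff space in $\mathrm{FinBW}(\mathcal{I})$ which is not a boring space. If additionally the continuum hypothesis (CH) holds, then (a) and (b) are also equivalent to each of: (c) there is an uncountable Mr\'owka space in $\mathrm{FinBW}(\mathcal{I})$; (d) there is an uncountable separable space in $\mathrm{FinBW}(\mathcal{I})$.
   Context: An ideal on an infinite countable set $X$ is a family $\mathcal{I}\subseteq\mathcal{P}(X)$ closed under subsets and finite unions, containing all finite subsets of $X$, with $X\notin\mathcal{I}$; we write $\bigcup\mathcal{I}=X$. $\mathrm{Fin}$ is the ideal of finite subsets of $\omega$. For $Y\subseteq X$, $\mathcal{I}|Y=\{A\cap Y: A\in\mathcal{I}\}$. A topological space $X$ is in $\mathrm{FinBW}(\mathcal{I})$ ($\mathcal{I}$ an ideal on a countable set $M$) if $X$ is Hausdorff and for every sequence $(x_n)_{n\in M}$ in $X$ there is $A\subseteq M$, $A\notin\mathcal{I}$, such that $(x_n)_{n\in A}$ converges in $X$ (i.e., there is $x\in X$ with $\{n\in A: x_n\notin U\}$ finite for every open neighbourhood $U$ of $x$). For $A\subseteq X\times Y$ and $x\in X$ let $A_{(x)}=\{y:(x,y)\in A\}$. $\mathrm{Fin}^2$ is the ideal on $\omega^2$ of all $A$ with $\{n: A_{(n)}\text{ infinite}\}$ finite. $\mathcal{BI}$ is the ideal on $\omega^3$ of all $A\subseteq\omega^3$ for which there is $k$ such that $A_{(i)}\in\mathrm{Fin}^2$ for all $i<k$ and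 $A_{(i)}$ is finite for all $i\ge k$ (here $A_{(i)}=\{(j,l):(i,j,l)\in A\}$). For ideals $\mathcal{I},\mathcal{J}$ write $\mathcal{I}\sqsubseteq\mathcal{J}$ if there is a bijection $f:\bigcup\mathcal{J}\to\bigcup\mathcal{I}$ with $f^{-1}[A]\in\mathcal{J}$ for all $A\in\mathcal{I}$. An ideal $\mathcal{I}$ is boring if $\mathcal{BI}\sqsubseteq\mathcal{I}$, and unboring otherwise. A topological space $X$ is boring if it is sequentially compact and there is a finite $F\subseteq X$ such that every convergent sequence in $X$ with infinitely many distinct values (a ''surjective'' convergent sequence onto an infinite set) converges to some point of $F$. An almost disjoint (AD) family is a family of infinite subsets of $\omega$ with pairwise finite intersections. For an infinite AD family $\mathcal{A}$, $\Phi(\mathcal{A})$ is the space with underlying set $\omega\cup\mathcal{A}\cup\{\infty\}$ where points of $\omega$ are isolated, basic neighbourhoods of $A\in\mathcal{A}$ are $\{A\}\cup(A\setminus F)$ with $F\subseteq\omega$ finite, and basic neighbourhoods of $\infty$ are $\{\infty\}\cup(\mathcal{A}\setminus G)\cup(\omega\setminus(F\cup\bigcup G))$ with $F\subseteq\omega$, $G\subseteq\mathcal{A}$ finite. A Mr\'owka space is a space of the form $\Phi(\mathcal{A})$ for some infinite AD family $\mathcal{A}$. *)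

From HB Require Import structures.
From mathcomp Require Import all_boot all_order.
From mathcomp Require Import all_classical all_reals all_analysis.
Set Implicit Arguments. Unset Strict Implicit. Unset Printing Implicit Defensive.
Import Order.TTheory.
Local Open Scope classical_set_scope.

Definition is_ideal (M : Type) (I : set (set M)) : Prop :=
  [/\ (forall A B : set M, B `<=` A -> I A -> I B),
      (forall A B : set M, I A -> I B -> I (A `|` B)),
      (forall A : set M, finite_set A -> I A) &
      ~ I setT].

Definition section (X Y : Type) (A : set (X * Y)) (x : X) : set Y :=
  [set y | A (x, y)].

Definition Fin2 (A : set (nat * nat)) : Prop :=
  finite_set [set n | ~ finite_set (section A n)].

(** BI on omega^3, with (i,j,l) represented as (i,(j,l)). *)
Definition BI (A : set (nat * (nat * nat))) : Prop :=
  exists k : nat,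
    (forall i, (i < k)%N -> Fin2 (section A i)) /\
    (forall i, (k <= i)%N -> finite_set (section A i)).

Definition ideal_below (M N : Type) (I : set (set M)) (J : set (set N)) : Prop :=
  exists f : N -> M, bijective f /\ forall A : set M, I A -> J (f @^-1` A).

Definition unboring (M : Type) (I : set (set M)) : Prop := ~ ideal_below BI I.

Definition conv_on (M : Type) (X : topologicalType) (f : M -> X) (A : set M) (x : X) :=
  forall U : set X, open U -> U x -> finite_set [set n | A n /\ ~ U (f n)].

Definition FinBW (M : Type) (I : set (set M)) (X : topologicalType) : Prop :=
  hausdorff_space X /\
  forall f : M -> X, exists A : set M, ~ I A /\ exists x : X, conv_on f A x.

Definition seq_compact (X : topologicalType) : Prop :=
  forall s : nat -> X, exists phi : nat -> nat,
    (forall n, (phi n < phi n.+1)%N) /\ exists x : X, (s \o phi) @ \oo --> x.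

Definition boring_space (X : topologicalType) : Prop :=
  seq_compact X /\
  exists F : set X, finite_set F /\
    forall s : nat -> X, ~ finite_set (range s) ->
      (exists x : X, s @ \oo --> x) -> exists y, F y /\ s @ \oo --> y.

Definition separable_space (X : topologicalType) : Prop :=
  exists S : set X, countable S /\ dense S.

Definition CH : Prop :=
  forall S : set (set nat), ~ countable S -> (S #= [set: set nat])%card.

Definition AD_family (A : set (set nat)) : Prop :=
  (forall a, A a -> ~ finite_set a) /\
  (forall a b, A a -> A b -> a <> b -> finite_set (a `&` b)).

Definition infinite_AD (A : set (set nat)) : Prop := AD_family A /\ ~ finite_set A.

(** The Mrówka space Phi(A): points inl n (n in omega), inr (inl a) (a in A),
    inr (inr tt) (= infinity). *)
Definition mrowka (A : set (set nat)) : Type := (nat + (A + unit))%type.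

HB.instance Definition _ (A : set (set nat)) := Choice.on (mrowka A).

Section Mrowka.
Context (A : set (set nat)).
Local Notation P := (mrowka A).

Definition mr_nat (n : nat) : P := inl n.
Definition mr_pt (a : A) : P := inr (inl a).
Definition mr_inf : P := inr (inr tt).

Definition mr_open (U : set P) : Prop :=
  (forall a : A, U (mr_pt a) ->
     exists F : set nat, finite_set F /\
       forall n, val a n -> ~ F n -> U (mr_nat n)) /\
  (U mr_inf ->
     exists (F : set nat) (G : set A), finite_set F /\ finite_set G /\
       (forall a : A, ~ G a -> U (mr_pt a)) /\
       (forall n, ~ F n -> (forall a : A, G a -> ~ val a n) -> U (mr_nat n))).

Lemma mr_openT : mr_open setT.
Proof.
split.
  by move=> a _; exists set0; split=> //; exact: finite_set0.
move=> _; exists set0, set0; split; first exact: finite_set0.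
by split; first exact: finite_set0.
Qed.

Lemma mr_openI : setI_closed mr_open.
Proof.
move=> U V [U1 U2] [V1 V2]; split.
  move=> a [Ua Va].
  have [F [fF HF]] := U1 a Ua; have [F' [fF' HF']] := V1 a Va.
  exists (F `|` F'); split; first by rewrite finite_setU.
  by move=> n an nF; split; [apply: HF => // ?; apply: nF; left
                            | apply: HF' => // ?; apply: nF; right].
move=> [Ui Vi].
have [F [G [fF [fG [HG HF]]]]] := U2 Ui.
have [F' [G' [fF' [fG' [HG' HF']]]]] := V2 Vi.
exists (F `|` F'), (G `|` G'); split; first by rewrite finite_setU.
split; first by rewrite finite_setU.
split.
  by move=> a nG; split; [apply: HG => ?; apply: nG; left
                         | apply: HG' => ?; apply: nG; right].
move=> n nF nG; split.
  by apply: HF => [?|a Ga]; [apply: nF; left | apply: nG; left].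
by apply: HF' => [?|a Ga]; [apply: nF; right | apply: nG; right].
Qed.

Lemma mr_open_bigU (I : Type) (f : I -> set P) :
  (forall i, mr_open (f i)) -> mr_open (\bigcup_i f i).
Proof.
move=> H; split.
  move=> a [i _ fia]; have [F [fF HF]] := (H i).1 a fia.
  by exists F; split=> // n an nF; exists i => //; apply: HF.
move=> [i _ fii]; have [F [G [fF [fG [HG HF]]]]] := (H i).2 fii.
exists F, G; split=> //; split=> //; split.
  by move=> a nG; exists i => //; apply: HG.
by move=> n nF nG; exists i => //; apply: HF.
Qed.

HB.instance Definition _ :=
  isOpenTopological.Build P mr_openT mr_openI mr_open_bigU.

End Mrowka.

(* If BI ⊑ I then FinBW(I) ⊆ FinBW(BI), and a Hausdorff FinBW(BI) space is
   boring: otherwise it has infinitely many distinct limits x i of injective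
   sequences, which can be refined to pairwise disjoint injective sequences
   y i, and no BI-positive set of indices (i, j, l) makes y i j converge.
   Conversely, if I is unboring, the Mrowka space of a countable AD family is
   in FinBW(I): a sequence without I-positive convergent subsequence sorts the
   indices into cells and columns exhibiting BI ⊑ I.  Such a space is not
   boring; uncountable Mrowka spaces are separable, whereas separable boring
   spaces are countable.  Under CH an uncountable AD family with Mrowka space
   in FinBW(I) is built by a recursion of length omega_1 which, at each stage,
   adds a member making one of the continuum many sequences converge. *)

From HB Require Import structures.
From mathcomp Require Import all_boot all_order.
From mathcomp Require Import all_classical all_reals all_analysis.
From mathcomp Require Import wochoice zify.
Set Implicit Arguments. Unset Strict Implicit. Unset Printing Implicit Defensive.
Local Open Scope classical_set_scope.

Lemma finite_nat_bounded (A : set nat) :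
  finite_set A -> exists N, forall n, A n -> (n < N)%N.
Proof.
move=> /finite_seqP[s ->]; exists (\max_(i <- s) i).+1 => n /= ns.
by rewrite ltnS; apply: (@leq_bigmax_seq _ s xpredT id n).
Qed.

Lemma bounded_nat_finite (A : set nat) N :
  (forall n, A n -> (n < N)%N) -> finite_set A.
Proof. by move=> AN; apply: (@sub_finite_set _ _ `I_N) (finite_II N) => n /AN. Qed.

Lemma inj_sub_finite_set (T U : Type) (h : T -> U) (D : set T) (E : set U) :
  {in D &, injective h} -> (forall t, D t -> E (h t)) -> finite_set E ->
  finite_set D.
Proof.
move=> hinj hDE fE; rewrite -(eq_finite_set (inj_card_eq hinj)).
by apply: sub_finite_set fE => _ [t Dt <-]; exact: hDE.
Qed.

Lemma subsingleton_finite_set (T : Type) (P : set T) :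
  (forall a b, P a -> P b -> a = b) -> finite_set P.
Proof.
move=> Psub; have [[a Pa]|P0] := pselect (P !=set0).
  by apply: sub_finite_set (finite_set1 a) => b Pb; exact: Psub.
by apply: sub_finite_set (finite_set0 T) => b Pb; apply: P0; exists b.
Qed.

Lemma infinite_set_neq (T : Type) (S : set T) a :
  infinite_set S -> exists b, S b /\ b <> a.
Proof.
by move=> /infinite_setD /(_ (finite_set1 a)) /infinite_setN0[b []]; exists b.
Qed.

(* Recursion on the finite set of values already chosen. *)
Lemma injective_seq_in (T : Type) (S : nat -> set T) :
  (forall n, infinite_set (S n)) ->
  exists z : nat -> T, injective z /\ forall n, S n (z n).
Proof.
move=> Sinf.
have [pk pkP] : {pk : nat * set T -> T &
    forall nU, finite_set nU.2 -> S nU.1 (pk nU) /\ ~ nU.2 (pk nU)}.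
  apply: (@choice _ _ (fun nU v => finite_set nU.2 -> S nU.1 v /\ ~ nU.2 v)).
  move=> [n U] /=.
  have [fU|] := pselect (finite_set U); last by have [v _] := infinite_setN0 (Sinf n); exists v.
  by have /infinite_setN0[v []] := infinite_setD (Sinf n) fU; exists v.
pose fix used n := if n is n'.+1 then used n' `|` [set pk (n', used n')] else set0.
have used_fin n : finite_set (used n).
  elim: n => [|n IH] /=; first exact: finite_set0.
  by rewrite finite_setU; split=> //; exact: finite_set1.
have used_lt m n : (m < n)%N -> used n (pk (m, used m)).
  elim: n => // n IH; rewrite ltnS leq_eqVlt => /orP[/eqP->|/IH]; by [right|left].
exists (fun n => pk (n, used n)); split => [m n|n]; last exact: (pkP (_, _) (used_fin n)).1.
have [mn|nm|//] := ltngtP m n => E.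
- by have := (pkP (n, _) (used_fin n)).2; rewrite -E; move/(_ (used_lt _ _ mn)).
- by have := (pkP (m, _) (used_fin m)).2; rewrite E; move/(_ (used_lt _ _ nm)).
Qed.

Section Convergence.
Context (M : Type) (X : topologicalType).
Implicit Types (f : M -> X) (A B : set M) (x y : X).

Lemma conv_on_sub f A B x : B `<=` A -> conv_on f A x -> conv_on f B x.
Proof.
move=> BA fAx U oU Ux; apply: sub_finite_set (fAx U oU Ux) => n [/BA An nU].
by split.
Qed.

Lemma conv_on_ae f A x :
  finite_set [set n | A n /\ f n <> x] -> conv_on f A x.
Proof.
move=> fin U oU Ux; apply: sub_finite_set fin => n [An nU]; split=> // fnx.
by apply: nU; rewrite fnx.
Qed.

Lemma conv_on_unique f A x y : hausdorff_space X ->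
  infinite_set A -> conv_on f A x -> conv_on f A y -> x = y.
Proof.
move=> hX Ainf fAx fAy; apply: contrapT => /eqP nxy.
move: hX; rewrite open_hausdorff => /(_ x y nxy) [[U V] /= [xU yV] [oU oV /eqP UV0]].
rewrite inE in xU; rewrite inE in yV.
have : finite_set ([set n | A n /\ ~ U (f n)] `|` [set n | A n /\ ~ V (f n)]).
  by rewrite finite_setU; split; [exact: fAx|exact: fAy].
apply: contra_not Ainf => fin; apply: sub_finite_set fin => n An.
have [Ufn|] := pselect (U (f n)); last by left.
have [Vfn|] := pselect (V (f n)); last by right.
by have : (U `&` V) (f n) by []; rewrite UV0.
Qed.

Lemma conv_on_const f A A' x c : hausdorff_space X ->
  infinite_set A' -> A' `<=` A -> (forall n, A' n -> f n = c) ->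
  conv_on f A x -> x = c.
Proof.
move=> hX A'inf A'A fc fAx; apply: (conv_on_unique hX A'inf (conv_on_sub A'A fAx)).
by apply: conv_on_ae; apply: sub_finite_set (finite_set0 M) => n [/fc].
Qed.

Lemma conv_on_range_inj (s : nat -> X) f x : s @ \oo --> x ->
  injective f -> (forall m, range s (f m)) -> conv_on f setT x.
Proof.
move=> sx finj fs U oU Ux.
have [N _ sNU] := sx U (open_nbhs_nbhs (conj oU Ux)).
apply: (inj_sub_finite_set (in2W finj) _ (finite_image s (finite_II N))).
move=> m [_ nU]; have [n _ snm] := fs m; exists n => //=.
by rewrite ltnNge; apply/negP => /sNU; rewrite /= snm.
Qed.

End Convergence.

Lemma cvg_conv_onT (X : topologicalType) (s : nat -> X) x :
  s @ \oo --> x <-> conv_on s setT x.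
Proof.
split=> [sx U oU Ux|sx U].
  have [N _ sNU] := sx U (open_nbhs_nbhs (conj oU Ux)).
  apply: (@bounded_nat_finite _ N) => n [_ nU].
  by rewrite ltnNge; apply/negP => /sNU.
rewrite nbhsE => -[B [oB Bx] BU].
have [N sNB] := finite_nat_bounded (sx B oB Bx).
exists N => // n /= Nn; apply: BU; apply: contrapT => nB.
by have := sNB n (conj I nB); rewrite ltnNge Nn.
Qed.

Section Ideal.
Variables (M : Type) (I : set (set M)).
Hypothesis HI : is_ideal I.

Lemma ideal_sub A B : B `<=` A -> I A -> I B.
Proof. by case: HI => + _ _ _; apply. Qed.

Lemma ideal_setU A B : I A -> I B -> I (A `|` B).
Proof. by case: HI => _ + _ _; apply. Qed.

Lemma ideal_finite A : finite_set A -> I A.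
Proof. by case: HI => _ _ + _; apply. Qed.

Lemma ideal_properT : ~ I setT.
Proof. by case: HI. Qed.

Lemma ideal_bigcup (T : eqType) (F : T -> set M) (D : set T) :
  finite_set D -> (forall i, D i -> I (F i)) -> I (\bigcup_(i in D) F i).
Proof.
move=> /finite_seqP[s ->]; elim: s => [|a s IH] IF.
  by apply: ideal_finite; apply: sub_finite_set (finite_set0 M) => m [].
have sub : \bigcup_(i in [set` a :: s]) F i `<=` F a `|` \bigcup_(i in [set` s]) F i.
  by move=> m [i /=]; rewrite inE => /orP[/eqP->|si] Fim; [left|right; exists i].
apply: ideal_sub sub _; apply: ideal_setU; first by apply: IF; rewrite /= mem_head.
by apply: IH => i si; apply: IF; rewrite /= inE si orbT.
Qed.

Lemma nonideal_setU A B : ~ I (A `|` B) -> ~ I A \/ ~ I B.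
Proof.
move=> nAB; apply: contrapT => /not_orP[/contrapT IA /contrapT IB].
exact/nAB/ideal_setU.
Qed.

Lemma nonideal_infinite A : ~ I A -> infinite_set A.
Proof. by move=> nA /ideal_finite. Qed.

Lemma nonideal_super A B : B `<=` A -> ~ I B -> ~ I A.
Proof. by move=> BA nB /(ideal_sub BA). Qed.

Lemma nonideal_setD A F : finite_set F -> ~ I A -> ~ I (A `\` F).
Proof.
move=> fF nA IAF; apply: nA; apply: ideal_sub (ideal_setU IAF (ideal_finite fF)).
by move=> m Am; have [Fm|nFm] := pselect (F m); [right|left].
Qed.

End Ideal.

Lemma ideal_below_FinBW (M N : Type) (I : set (set M)) (J : set (set N))
    (X : topologicalType) :
  ideal_below J I -> FinBW I X -> FinBW J X.
Proof.
move=> [f [[g fK gK] fJI]] [hX XI]; split=> // s.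
have [B [nIB [x Bx]]] := XI (s \o f).
have fBK : f @^-1` (f @` B) = B.
  apply/seteqP; split=> m /=; last by exists m.
  by move=> [m' Bm' /(can_inj fK) <-].
exists (f @` B); split; first by move=> /fJI; rewrite fBK.
exists x => U oU Ux; apply: sub_finite_set (finite_image f (Bx U oU Ux)).
by move=> _ [[m Bm <-] nU]; exists m.
Qed.

(** * FinBW(BI) spaces are boring *)

Lemma BI_finite (A : set (nat * (nat * nat))) : finite_set A -> BI A.
Proof.
move=> fA; exists 0%N; split=> // i _.
have : finite_set (snd @` (A `&` [set t | t.1 = i])).
  by apply: finite_image; exact: finite_setIl.
by apply: sub_finite_set => jl Ajl; exists (i, jl).
Qed.

Lemma nonBI_cases (A : set (nat * (nat * nat))) : ~ BI A ->
  (exists i, infinite_set [set j | infinite_set (section (section A i) j)]) \/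
  infinite_set [set i | infinite_set (section A i)].
Proof.
move=> nA; apply: contrapT => /not_orP[/forallNP rows /contrapT cols].
apply: nA; have [N colsN] := finite_nat_bounded cols.
exists N; split=> [i _|i Ni]; first by apply: contrapT; exact: rows.
apply: contrapT => /colsN; by rewrite ltnNge Ni.
Qed.

Lemma increasing_leq (phi : nat -> nat) :
  (forall n, (phi n < phi n.+1)%N) -> forall n, (n <= phi n)%N.
Proof. by move=> phiS; elim=> // n IH; exact: leq_ltn_trans IH (phiS n). Qed.

Lemma increasing_inj (phi : nat -> nat) :
  (forall n, (phi n < phi n.+1)%N) -> injective phi.
Proof. by move=> phiS; exact/incn_inj/leq_mono/(homo_ltn ltn_trans phiS). Qed.

Lemma conv_on_subseq (X : topologicalType) (s : nat -> X) (N : set nat) x :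
  infinite_set N -> conv_on s N x ->
  exists phi : nat -> nat, (forall n, (phi n < phi n.+1)%N) /\ (s \o phi) @ \oo --> x.
Proof.
move=> Ninf sNx.
have [|phi [phi_incr _ Nphi]] := @infinite_increasing_seq_wf _ nat N _ Ninf 0%N.
  by move=> n; apply: (@bounded_nat_finite _ n.+1) => m /=; rewrite ltnS.
have phiS : forall n, (phi n < phi n.+1)%N := (increasing_seqP phi).2 phi_incr.
exists phi; split=> //; apply/cvg_conv_onT => U oU Ux.
have [K sK] := finite_nat_bounded (sNx U oU Ux).
apply: (@bounded_nat_finite _ K) => n [_ /= nU].
exact: leq_ltn_trans (increasing_leq phiS n) (sK _ (conj (Nphi n) nU)).
Qed.

Lemma FinBW_BI_seq_compact (X : topologicalType) : FinBW BI X -> seq_compact X.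
Proof.
move=> [_ XBI] s; pose sum3 (t : nat * (nat * nat)) := (t.1 + t.2.1 + t.2.2)%N.
have [A [nBI [x Ax]]] := XBI (s \o sum3).
suff [phi [phiS sx]] : exists phi : nat -> nat,
    (forall n, (phi n < phi n.+1)%N) /\ (s \o phi) @ \oo --> x.
  by exists phi; split=> //; exists x.
apply: (@conv_on_subseq _ s (sum3 @` A)).
  move=> /finite_nat_bounded[K sK]; apply: nBI; apply: BI_finite.
  have : finite_set (`I_K `*` (`I_K `*` `I_K)).
    by apply: finite_setX; [exact: finite_II|apply: finite_setX; exact: finite_II].
  apply: sub_finite_set => -[i [j l]] At; have := sK _ (ex_intro2 _ _ _ At erefl).
  by rewrite /sum3 /= => ijl; split; [|split] => /=; lia.
move=> U oU Ux; apply: sub_finite_set (finite_image sum3 (Ax U oU Ux)).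
by move=> _ [[t At <-] nU]; exists t.
Qed.

Lemma nonboring_limits (X : topologicalType) : seq_compact X -> ~ boring_space X ->
  infinite_set [set x : X | exists s : nat -> X, infinite_set (range s) /\ s @ \oo --> x].
Proof.
move=> sc nb fL; apply: nb; split=> //; eexists; split; first exact: fL.
by move=> s rs [x sx]; exists x; split=> //; exists s.
Qed.

Section FinBW_BI.
Variables (X : topologicalType) (x : nat -> X) (y : nat -> nat -> X).
Hypotheses (hX : hausdorff_space X) (XBI : FinBW BI X) (xinj : injective x).
Hypothesis yinj : forall i j i' j', y i j = y i' j' -> (i, j) = (i', j').
Hypothesis yx : forall i, conv_on (y i) setT (x i).

Lemma FinBW_BI_no_double_seq : False.
Proof.
have [A [nBI [z Az]]] := XBI.2 (fun t => y t.1 t.2.1).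
have column_lim i j : infinite_set (section (section A i) j) -> z = y i j.
  move=> Aij; apply: (conv_on_const (A' := [set t | A t /\ t.1 = i /\ t.2.1 = j]) hX _ _ _ Az).
  - apply: contra_not Aij => /(finite_image (fun t => t.2.2)).
    by apply: sub_finite_set => l Al; exists (i, (j, l)).
  - by move=> t [].
  - by move=> t [_ [<- <-]].
have row_lim i : infinite_set (section A i) ->
    (forall j, finite_set (section (section A i) j)) -> z = x i.
  move=> Ai Aij; pose Ai' := [set t | A t /\ t.1 = i].
  have Ai'inf : infinite_set Ai'.
    apply: contra_not Ai => /(finite_image snd).
    by apply: sub_finite_set => jl Ajl; exists (i, jl).
  apply: (conv_on_unique hX Ai'inf (conv_on_sub (fun t (At : Ai' t) => At.1) Az)).
  move=> U oU Ux; have : finite_set (\bigcup_(j in [set j | ~ U (y i j)])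
      ((fun l => (i, (j, l))) @` section (section A i) j)).
    apply: bigcup_finite => [|j _]; last exact: finite_image.
    by apply: sub_finite_set (@yx i U oU Ux) => j nU; split.
  apply: sub_finite_set => -[i' [j l]] [[At /= <-] nU].
  by exists j => //; exists l.
case: (nonBI_cases nBI) => [[i cols]|rows].
  have [j1 Aij1] := infinite_setN0 cols.
  have [j2 [Aij2 j21]] := infinite_set_neq j1 cols.
  by have := column_lim _ _ Aij1; rewrite (column_lim _ _ Aij2) => /yinj[].
apply: rows; apply: (@sub_finite_set _ _ ([set i | z = x i] `|` [set i | exists j, z = y i j])).
  move=> i Ai; have [[j Aij]|] := pselect (exists j, infinite_set (section (section A i) j)).
    by right; exists j; exact: column_lim.
  by move=> /forallNP Aij; left; apply: row_lim => // j; exact: contrapT.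
rewrite finite_setU; split; apply: subsingleton_finite_set.
  by move=> i i' -> /xinj.
by move=> i i' [j ->] [j' /yinj[]].
Qed.

End FinBW_BI.

Theorem FinBW_BI_boring (X : topologicalType) :
  hausdorff_space X -> FinBW BI X -> boring_space X.
Proof.
move=> hX XBI; have sc := FinBW_BI_seq_compact XBI; apply: contrapT => nb.
have [x [xinj xL]] := injective_seq_in (fun=> nonboring_limits sc nb).
have [s sx] : {s : nat -> nat -> X &
    forall i, infinite_set (range (s i)) /\ s i @ \oo --> x i}.
  by apply: (@choice _ _ (fun i si => infinite_set (range si) /\ si @ \oo --> x i)).
pose row n := if (unpickle n : option (nat * nat)) is Some (i, _) then i else 0%N.
have [z [zinj zs]] := injective_seq_in (fun n => (sx (row n)).1).
pose y i j := z (pickle ((i, j) : nat * nat)).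
have yinj i j i' j' : y i j = y i' j' -> (i, j) = (i', j').
  by move=> /zinj /(pcan_inj pickleK).
apply: (@FinBW_BI_no_double_seq _ x y hX XBI xinj yinj) => i.
apply: (conv_on_range_inj (sx i).2) => [j j' /yinj[]//|j].
by have := zs (pickle ((i, j) : nat * nat)); rewrite /row pickleK.
Qed.

(** * Separable boring spaces are countable *)

Lemma open_bigcap_finite (T : eqType) (X : topologicalType) (F : set T)
    (V : T -> set X) :
  finite_set F -> (forall p, F p -> open (V p)) -> open (\bigcap_(p in F) V p).
Proof.
move=> /finite_seqP[s ->]; elim: s => [|a s IH] oV.
  by rewrite (_ : \bigcap_(p in _) V p = setT); [exact: openT|apply/seteqP; split].
rewrite (_ : \bigcap_(p in _) V p = V a `&` \bigcap_(p in [set` s]) V p).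
  apply: openI; first by apply: oV; rewrite /= mem_head.
  by apply: IH => p ps; apply: oV; rewrite /= inE ps orbT.
apply/seteqP; split=> x.
  move=> Vx; split=> [|p ps]; apply: Vx; by rewrite /= inE ?eqxx ?ps ?orbT.
by move=> [Vax Vx] p /=; rewrite inE => /orP[/eqP->//|ps]; exact: Vx.
Qed.

Lemma countable_setU (T : Type) (A B : set T) :
  countable A -> countable B -> countable (A `|` B).
Proof.
move=> cA cB; rewrite (_ : A `|` B = \bigcup_(b in [set: bool]) (if b then A else B)).
  by apply: bigcup_countable => // -[].
apply/seteqP; split=> x; first by case=> ?; [exists true|exists false].
by case=> -[] _ ?; [left|right].
Qed.

Section BoringSpace.
Variables (X : topologicalType) (F : set X).
Hypothesis sc : seq_compact X.
Hypothesis limF : forall s : nat -> X, infinite_set (range s) ->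
  (exists x : X, s @ \oo --> x) -> exists y, F y /\ s @ \oo --> y.

(* An infinite set would carry an injective sequence, a subsequence of which
   converges to a point of F. *)
Lemma boring_finite_away (V : set X) :
  (forall p, F p -> exists2 W, open W & W p /\ W `&` V = set0) -> finite_set V.
Proof.
move=> away; apply: contrapT => Vinf.
have [t [tinj tV]] := injective_seq_in (fun=> Vinf).
have [phi [phiS [q tq]]] := sc t.
have rinf : infinite_set (range (t \o phi)).
  apply: contra_not infinite_nat => fr.
  apply: (inj_sub_finite_set (h := t \o phi) _ _ fr) => [m n _ _ /tinj/(increasing_inj phiS)//|n _].
  by exists n.
have [p [Fp tp]] := limF rinf (ex_intro _ q tq).
have [W oW [Wp WV0]] := away p Fp.
apply: infinite_nat; apply: sub_finite_set ((cvg_conv_onT _ _).1 tp W oW Wp) => n _.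
by split=> // Wtn; have : (W `&` V) (t (phi n)) by []; rewrite WV0.
Qed.

End BoringSpace.

Theorem separable_boring_countable (X : topologicalType) :
  hausdorff_space X -> boring_space X -> separable_space X -> countable [set: X].
Proof.
move=> hX [sc [F [fF limF]]] [D [cD dD]].
suff DF : [set: X] `<=` D `|` F.
  apply: sub_countable (subset_card_le DF) (countable_setU cD (finite_set_countable fF)).
move=> y _; apply: contrapT => /not_orP[nDy nFy].
have sepy p : exists VW : set X * set X, F p ->
    [/\ open VW.1, open VW.2, VW.1 y, VW.2 p & VW.1 `&` VW.2 = set0].
  have [Fp|] := pselect (F p); last by exists (setT, setT).
  have := hX; rewrite open_hausdorff => /(_ y p) [].
    by apply/eqP => yp; apply: nFy; rewrite yp.
  by move=> [V W] /= [yV pW] [oV oW /eqP VW0]; exists (V, W); rewrite !inE in yV pW.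
have [VW VWP] := choice sepy.
pose V0 := \bigcap_(p in F) (VW p).1.
have oV0 : open V0 by apply: open_bigcap_finite => // p /VWP[].
have V0y : V0 y by move=> p /VWP[].
have fV0 : finite_set V0.
  apply: (boring_finite_away sc limF) => p Fp; have [_ oW _ Wp VW0] := VWP p Fp.
  exists (VW p).2 => //; split=> //; apply/seteqP; split=> // z [Wz V0z].
  have : ((VW p).1 `&` (VW p).2) z by split=> //; exact: V0z.
  by rewrite VW0.
have cV0D : closed (V0 `&` D).
  exact: (proj1 accessible_finite_set_closed (hausdorff_accessible hX) _ (finite_setIl _ fV0)).
have [z [[V0z nV0Dz] Dz]] : (V0 `\` (V0 `&` D)) `&` D !=set0.
  apply: dD; first by exists y; split=> // -[].
  by apply: openI => //; exact: closed_openC.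
by apply: nV0Dz.
Qed.

(** * Mrowka spaces *)

Definition separated (T : topologicalType) (x y : T) := exists U V : set T,
  [/\ open U, open V, U x, V y & U `&` V = set0].

Lemma separated_sym (T : topologicalType) (x y : T) : separated x y -> separated y x.
Proof. by move=> [U [V [oU oV Ux Vy UV0]]]; exists V, U; rewrite setIC. Qed.

Lemma separated_hausdorff (T : topologicalType) :
  (forall x y : T, x <> y -> separated x y) -> hausdorff_space T.
Proof.
rewrite open_hausdorff => sep x y /eqP/sep[U [V [oU oV Ux Vy UV0]]].
by exists (U, V); rewrite ?inE //=; split=> //; apply/eqP.
Qed.

Lemma disjoint_setI0 (T : Type) (U V : set T) :
  (forall p, U p -> V p -> False) -> U `&` V = set0.
Proof. by move=> UV; apply/seteqP; split=> // p [/UV]. Qed.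

Definition fibre (M T : Type) (f : M -> T) (B : set M) (p : T) := [set m | B m /\ f m = p].

Section MrowkaTopology.
Variable A : set (set nat).
Local Notation P := (mrowka A).

Definition mr_pt_nbhs (a : A) (F : set nat) : set P :=
  [set p | p = mr_pt a \/ exists2 n, p = mr_nat A n & val a n /\ ~ F n].

Definition mr_inf_nbhs (G : set A) (F : set nat) : set P :=
  [set p | p = mr_inf A \/ (exists2 a, p = mr_pt a & ~ G a) \/
           (exists2 n, p = mr_nat A n & ~ F n /\ forall a, G a -> ~ val a n)].

Lemma mr_pt_inj : injective (@mr_pt A).
Proof. by move=> a b []. Qed.

Lemma open_mr_nat n : open [set mr_nat A n].
Proof. by split=> [a []|[]]. Qed.

Lemma open_mr_pt_nbhs a F : finite_set F -> open (mr_pt_nbhs a F).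
Proof.
move=> fF; split=> [a' [/mr_pt_inj<-|[n //]]|[|[]]//].
by exists F; split=> // n an nF; right; exists n.
Qed.

Lemma AD_finite_trace (HA : AD_family A) (a : A) (G : set A) :
  finite_set G -> ~ G a -> finite_set (val a `&` \bigcup_(b in G) val b).
Proof.
move=> fG nGa; have : finite_set (\bigcup_(b in G) (val a `&` val b)).
  apply: bigcup_finite => // b Gb; apply: HA.2; try exact: set_valP.
  by move=> ab; apply: nGa; rewrite (val_inj ab).
by apply: sub_finite_set => n [an [b Gb bn]]; exists b.
Qed.

Lemma open_mr_inf_nbhs (HA : AD_family A) G F :
  finite_set G -> finite_set F -> open (mr_inf_nbhs G F).
Proof.
move=> fG fF; split=> [a [//|[[a' /mr_pt_inj<- nGa]|[n //]]]|_].
  exists (F `|` (val a `&` \bigcup_(b in G) val b)); split.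
    by rewrite finite_setU; split=> //; exact: AD_finite_trace.
  move=> n an nF; right; right; exists n => //; split=> [Fn|b Gb bn].
    by apply: nF; left.
  by apply: nF; right; split=> //; exists b.
exists F, G; do 3!split=> //; first by move=> a nGa; right; left; exists a.
by move=> n nF nG; right; right; exists n.
Qed.

Section MrowkaHausdorff.
Hypothesis HA : AD_family A.

Lemma mr_separated_nat_nat n m : n <> m -> separated (mr_nat A n) (mr_nat A m).
Proof.
move=> nm; exists [set mr_nat A n], [set mr_nat A m].
by split=> //; apply: disjoint_setI0 => p /= -> [/nm].
Qed.

Lemma mr_separated_nat_pt n (a : A) : separated (mr_nat A n) (mr_pt a).
Proof.
exists [set mr_nat A n], (mr_pt_nbhs a [set n]); split=> //; try by left.
  exact/open_mr_pt_nbhs/finite_set1.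
by apply: disjoint_setI0 => p /= -> [//|[k [<-] [_ /(_ erefl)]]].
Qed.

Lemma mr_separated_nat_inf n : separated (mr_nat A n) (mr_inf A).
Proof.
exists [set mr_nat A n], (mr_inf_nbhs set0 [set n]); split=> //; try by left.
  exact: open_mr_inf_nbhs (finite_set0 _) (finite_set1 _).
by apply: disjoint_setI0 => p /= -> [//|[[a' //]|[k [<-] [/(_ erefl)]]]].
Qed.

Lemma mr_separated_pt_pt (a b : A) : a <> b -> separated (mr_pt a) (mr_pt b).
Proof.
move=> ab; pose F := val a `&` val b.
have fF : finite_set F.
  by apply: HA.2; try exact: set_valP; move=> E; apply: ab; exact: val_inj.
exists (mr_pt_nbhs a F), (mr_pt_nbhs b F); split; try exact: open_mr_pt_nbhs; try by left.
apply: disjoint_setI0 => p /= [->|[n -> [an nF]]] [] //.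
- by move=> /mr_pt_inj.
- by case.
- by move=> [k [<-] [bn _]]; apply: nF.
Qed.

Lemma mr_separated_pt_inf (a : A) : separated (mr_pt a) (mr_inf A).
Proof.
exists (mr_pt_nbhs a set0), (mr_inf_nbhs [set a] set0); split; try by left.
- exact/open_mr_pt_nbhs/finite_set0.
- exact: open_mr_inf_nbhs (finite_set1 _) (finite_set0 _).
apply: disjoint_setI0 => p /= [->|[n -> [an _]]] [] //.
- by move=> [[b /mr_pt_inj<- []]|[n //]].
- by move=> [[b //]|[k [<-] [_ /(_ a erefl)]]].
Qed.

Lemma mr_hausdorff : hausdorff_space P.
Proof.
apply: separated_hausdorff; case=> [n|[a|[]]] [m|[b|[]]] xy.
- by apply: mr_separated_nat_nat => nm; apply: xy; rewrite nm.
- exact: mr_separated_nat_pt.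
- exact: mr_separated_nat_inf.
- exact/separated_sym/mr_separated_nat_pt.
- by apply: mr_separated_pt_pt => ab; apply: xy; rewrite ab.
- exact: mr_separated_pt_inf.
- exact/separated_sym/mr_separated_nat_inf.
- exact/separated_sym/mr_separated_pt_inf.
- by case: xy.
Qed.

End MrowkaHausdorff.

Section MrowkaConvergence.
Variables (M : Type) (f : M -> P) (B : set M).

Lemma mr_pt_conv_on a : (forall n, finite_set (fibre f B (mr_nat A n))) ->
  finite_set [set m | B m /\ ~ (f m = mr_pt a \/ exists2 n, f m = mr_nat A n & val a n)] ->
  conv_on f B (mr_pt a).
Proof.
move=> fib_fin off_fin U oU Ua; have [F [fF aFU]] := oU.1 a Ua.
have : finite_set ([set m | B m /\ ~ (f m = mr_pt a \/ exists2 n, f m = mr_nat A n & val a n)]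
   `|` \bigcup_(n in F) fibre f B (mr_nat A n)).
  by rewrite finite_setU; split=> //; exact: bigcup_finite.
apply: sub_finite_set => m [Bm nU].
have [[fma|[n fmn an]]|] := pselect (f m = mr_pt a \/ exists2 n, f m = mr_nat A n & val a n).
- by exfalso; apply: nU; rewrite fma.
- by right; exists n => //; apply: contrapT => nFn; apply: nU; rewrite fmn; exact: aFU.
- by left.
Qed.

Lemma mr_inf_conv_on : (forall n, finite_set (fibre f B (mr_nat A n))) ->
  (forall a, finite_set (fibre f B (mr_pt a))) ->
  (forall a : A, finite_set [set m | B m /\ exists2 n, f m = mr_nat A n & val a n]) ->
  conv_on f B (mr_inf A).
Proof.
move=> fibn fibp trace U oU Ui; have [F [G [fF [fG [GU FGU]]]]] := oU.2 Ui.
have : finite_set ((\bigcup_(n in F) fibre f B (mr_nat A n)) `|`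
   (\bigcup_(a in G) fibre f B (mr_pt a)) `|`
   (\bigcup_(a in G) [set m | B m /\ exists2 n, f m = mr_nat A n & val a n])).
  by rewrite !finite_setU; split; [split|]; exact: bigcup_finite.
apply: sub_finite_set => m [Bm nU].
case E: (f m) nU => [n|[a|[]]] nU.
- have [Fn|nFn] := pselect (F n); first by left; left; exists n.
  have [[a Ga an]|nG] := pselect (exists2 a, G a & val a n).
    by right; exists a => //; split=> //; exists n.
  by exfalso; apply: nU; apply: FGU => // a Ga an; apply: nG; exists a.
- have [Ga|nGa] := pselect (G a); first by left; right; exists a.
  by exfalso; apply: nU; exact: GU.
- by exfalso; apply: nU; exact: Ui.
Qed.

Lemma conv_on_mr_pt_fibre a : conv_on f B (mr_pt a) ->
  forall n, finite_set (fibre f B (mr_nat A n)).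
Proof.
move=> fBa n; apply: sub_finite_set (fBa _ (open_mr_pt_nbhs a (finite_set1 n)) (or_introl erefl)).
by move=> m [Bm fm]; split=> //; rewrite fm => -[//|[k [<-] [_]]]; exact.
Qed.

Lemma conv_on_mr_pt_cofinite a : conv_on f B (mr_pt a) ->
  finite_set [set m | B m /\ ~ (f m = mr_pt a \/ exists2 n, f m = mr_nat A n & val a n)].
Proof.
move=> fBa; apply: sub_finite_set (fBa _ (open_mr_pt_nbhs a (finite_set0 nat)) (or_introl erefl)).
move=> m [Bm nfm]; split=> // -[fma|[n fmn [an _]]]; apply: nfm; first by left.
by right; exists n.
Qed.

Section ConvInf.
Hypotheses (HA : AD_family A) (fBi : conv_on f B (mr_inf A)).

Lemma conv_on_mr_inf_fibre_nat n : finite_set (fibre f B (mr_nat A n)).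
Proof.
apply: sub_finite_set (fBi (open_mr_inf_nbhs HA (finite_set0 A) (finite_set1 n)) (or_introl erefl)).
by move=> m [Bm fm]; split=> //; rewrite fm => -[//|[[a //]|[k [<-] [nk _]]]]; exact: nk.
Qed.

Lemma conv_on_mr_inf_fibre_pt a : finite_set (fibre f B (mr_pt a)).
Proof.
have oU := open_mr_inf_nbhs HA (finite_set1 a) (finite_set0 nat).
apply: sub_finite_set (fBi oU (or_introl erefl)).
by move=> m [Bm fm]; split=> //; rewrite fm => -[//|[[b /mr_pt_inj<-]|[k //]]]; exact.
Qed.

Lemma conv_on_mr_inf_trace (a : A) :
  finite_set [set m | B m /\ exists2 n, f m = mr_nat A n & val a n].
Proof.
have oU := open_mr_inf_nbhs HA (finite_set1 a) (finite_set0 nat).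
apply: sub_finite_set (fBi oU (or_introl erefl)).
move=> m [Bm [n fm an]]; split=> //; rewrite fm => -[//|[[b //]|[k [<-] [_ /(_ a)]]]].
exact.
Qed.

End ConvInf.

Lemma conv_on_mr_nat n : conv_on f B (mr_nat A n) ->
  finite_set [set m | B m /\ f m <> mr_nat A n].
Proof. by move=> fBn; apply: sub_finite_set (fBn _ (open_mr_nat n) erefl) => m []. Qed.

End MrowkaConvergence.

Section InfiniteAD.
Hypotheses (HA : AD_family A) (Ainf : ~ finite_set A).

Lemma AD_member_notin (G : set A) : finite_set G -> exists a : A, ~ G a.
Proof.
move=> fG; apply: contrapT => /forallNP nG; apply: Ainf.
apply: sub_finite_set (finite_image val fG) => x Ax.
by exists (SigSub (mem_set Ax)) => //; exact: contrapT.
Qed.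

Lemma AD_member_infinite (a : A) : infinite_set (val a).
Proof. by apply: HA.1; exact: set_valP. Qed.

(* Each a in A is the limit of an injective sequence of naturals, and only
   finitely many a can be excepted. *)
Lemma mr_not_boring : ~ boring_space P.
Proof.
move=> [_ [F [fF limF]]].
have [a nFa] : exists a : A, ~ F (mr_pt a).
  apply: AD_member_notin; apply: (inj_sub_finite_set (h := @mr_pt A) _ _ fF) => //.
  exact: in2W mr_pt_inj.
have [phi [phiinj aphi]] := injective_seq_in (fun=> @AD_member_infinite a).
pose s n := mr_nat A (phi n).
have sinj : injective s by move=> m n [/phiinj].
have rinf : infinite_set (range s).
  apply: contra_not infinite_nat => fr.
  by apply: (inj_sub_finite_set (h := s) _ _ fr) => [m n _ _ /sinj|n _]; last exists n.
have sa : s @ \oo --> mr_pt a.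
  apply/cvg_conv_onT; apply: mr_pt_conv_on.
    move=> n; apply: (inj_sub_finite_set (h := s) _ _ (finite_set1 (mr_nat A n))) => //.
      by move=> m k _ _ /sinj.
    by move=> m [].
  by apply: sub_finite_set (finite_set0 nat) => m [_ /(_ (or_intror _))]; apply; exists (phi m).
have [y [Fy sy]] := limF s rinf (ex_intro (fun x : P => s @ \oo --> x) _ sa).
have ya := conv_on_unique (mr_hausdorff HA) infinite_nat
  ((cvg_conv_onT _ _).1 sy) ((cvg_conv_onT _ _).1 sa).
by apply: nFa; rewrite -ya.
Qed.

Lemma mr_separable : separable_space P.
Proof.
exists (range (mr_nat A)); split.
  by apply: sub_countable (card_image_le _ _) _; exact: countableP.
move=> O [p Op] oO; case: p Op => [n|[a|[]]] Op.
- by exists (mr_nat A n); split=> //; exists n.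
- have [F [fF aFO]] := oO.1 a Op.
  have [n [an nFn]] := infinite_setN0 (infinite_setD (@AD_member_infinite a) fF).
  by exists (mr_nat A n); split; [exact: aFO|exists n].
- have [F [G [fF [fG [_ FGO]]]]] := oO.2 Op.
  have [b nGb] := AD_member_notin fG.
  have fFG : finite_set (F `|` (val b `&` \bigcup_(c in G) val c)).
    by rewrite finite_setU; split=> //; exact: AD_finite_trace.
  have [n [bn nFGn]] := infinite_setN0 (infinite_setD (@AD_member_infinite b) fFG).
  exists (mr_nat A n); split; last by exists n.
  apply: FGO => [Fn|c Gc cn]; apply: nFGn; first by left.
  by right; split=> //; exists c.
Qed.

End InfiniteAD.

End MrowkaTopology.

Lemma mr_uncountable (A : set (set nat)) :
  ~ countable A -> ~ countable [set: mrowka A].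
Proof.
move=> nA /countable_injP[h hinj]; apply: nA; apply/countable_injP.
pose g x : nat := if pselect (A x) is left Ax then h (mr_pt (SigSub (mem_set Ax))) else 0%N.
exists g => x y; rewrite !inE => Ax Ay; rewrite /g.
case: pselect => // Ax'; case: pselect => // Ay'.
by move=> /(hinj _ _ (mem_set I) (mem_set I)) [].
Qed.

(** * Ideals above BI *)

Lemma fibre_enum (M : countType) (T : Type) (c : M -> T) :
  (forall t, infinite_set [set m | c m = t]) ->
  exists e : M -> nat, (forall m m', c m = c m' -> e m = e m' -> m = m') /\
                       (forall t n, exists m, c m = t /\ e m = n).
Proof.
move=> cinf.
have fbij t : exists f : M -> nat, set_bij [set m | c m = t] [set: nat] f.
  by apply/card_set_bijP; apply: eq_card_nat => //; exact: countableP.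
have [F Fbij] := choice fbij.
exists (fun m => F (c m) m); split=> [m m' cmm'|t n].
  by rewrite -cmm' => Fmm'; have [_ Finj _] := Fbij (c m); apply: Finj; rewrite ?inE.
by have [_ _ Fsurj] := Fbij t; have [m /= <- Fm] := Fsurj n I; exists m.
Qed.

Section Cells.
Variables (M : countType) (I : set (set M)) (d : M -> nat * nat).
Hypotheses (HI : is_ideal I) (cell_inf : forall c, infinite_set [set m | d m = c]).
Hypothesis cell_ideal : forall c, I [set m | d m = c].
Hypothesis column_ideal : forall i (B : set M), (forall m, B m -> (d m).1 = i) ->
  (forall j, finite_set [set m | B m /\ d m = (i, j)]) -> I B.
Hypothesis columns_ideal : forall B : set M,
  (forall i, finite_set [set m | B m /\ (d m).1 = i]) -> I B.

(* h sends m to (i, j, e m), where d m = (i, j) and e enumerates the cell.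
   A BI-set pulls back into sets meeting each column finitely (the columns
   beyond k), the infinite cells of the first k columns, and sets meeting
   each cell of one of these columns finitely. *)
Lemma BI_below_of_cells : ideal_below BI I.
Proof.
have [e [einj esurj]] := fibre_enum cell_inf.
pose h (m : M) : nat * (nat * nat) := ((d m).1, ((d m).2, e m)).
have hinj : injective h.
  move=> m m' [d1 d2 em]; apply: einj => //.
  by rewrite [d m]surjective_pairing [d m']surjective_pairing d1 d2.
have [g hg] : {g : nat * (nat * nat) -> M & forall t, h (g t) = t}.
  apply: (@choice _ _ (fun t m => h m = t)) => -[i [j l]].
  by have [m [dm em]] := esurj (i, j) l; exists m; rewrite /h dm em.
exists h; split; first by exists g => [m|t]; [apply: hinj; rewrite hg|exact: hg].
move=> A [k [Alow Ahigh]].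
pose J i := [set j | infinite_set (section (section A i) j)].
have hA : h @^-1` A `<=` [set m | A (h m) /\ (k <= (d m).1)%N] `|`
    \bigcup_(i in [set i | (i < k)%N])
      ((\bigcup_(j in J i) [set m | d m = (i, j)]) `|`
       [set m | A (h m) /\ (d m).1 = i /\ ~ J i (d m).2]).
  move=> m /= Ahm; have [kd|dk] := leqP k (d m).1; [by left|right].
  exists (d m).1 => //; have [Jd|] := pselect (J (d m).1 (d m).2); last by right.
  by left; exists (d m).2 => //; rewrite -surjective_pairing.
apply: (ideal_sub HI hA); apply: (ideal_setU HI).
  apply: columns_ideal => i; have [ki|ik] := leqP k i; last first.
    by apply: sub_finite_set (finite_set0 M) => m [[_ kd] di]; move: kd; rewrite di leqNgt ik.
  apply: (inj_sub_finite_set (h := fun m => ((d m).2, e m)) _ _ (Ahigh i ki)).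
  - move=> m m' /set_mem[_ di] /set_mem[_ di'] [d2 em]; apply: einj => //.
    by rewrite [d m]surjective_pairing [d m']surjective_pairing di di' d2.
  - by move=> m [[Ahm _] <-].
apply: (ideal_bigcup HI (bounded_nat_finite (fun i (ik : (i < k)%N) => ik))) => i ik.
apply: (ideal_setU HI).
  by apply: (ideal_bigcup HI (Alow i ik)) => j _; exact: cell_ideal.
apply: (column_ideal (i := i)) => [m [_ []]//|j].
have [Jj|nJj] := pselect (J i j).
  by apply: sub_finite_set (finite_set0 M) => m [[_ [_ nJ]] dm]; apply: nJ; rewrite dm.
apply: (inj_sub_finite_set (h := e) _ _ (contrapT nJj)).
- move=> m m' /set_mem[_ dm] /set_mem[_ dm'] em; apply: einj => //.
  by rewrite dm dm'.
- by move=> m [[Ahm _] dm]; move: Ahm; rewrite /h dm.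
Qed.

End Cells.

Definition rank (X : set nat) (x : nat) : nat :=
  count (fun y => `[< X y >]) (iota 0 x).

Lemma rankS X x : rank X x.+1 = (rank X x + `[< X x >])%N.
Proof. by rewrite /rank -addn1 iotaD count_cat add0n /= addn0. Qed.

Lemma rank_mono X : {homo rank X : x y / (x <= y)%N}.
Proof.
move=> x y /subnK <-; elim: (y - x)%N => // k IH.
by rewrite addSn rankS; exact: leq_trans IH (leq_addr _ _).
Qed.

Lemma rank_lt X x y : X x -> (x < y)%N -> (rank X x < rank X y)%N.
Proof.
move=> Xx xy; apply: leq_trans (rank_mono X xy).
by rewrite rankS (asboolT Xx) addn1.
Qed.

Section RankInfinite.
Variables (X : set nat).
Hypothesis Xinf : infinite_set X.

Lemma rank_unbounded k : exists y, (k <= rank X y)%N.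
Proof.
elim: k => [|k [y ky]]; first by exists 0%N.
have [x [Xx yx]] : exists x, X x /\ (y <= x)%N.
  apply: contrapT => noX; apply: Xinf; apply: (@bounded_nat_finite _ y) => x Xx.
  by rewrite ltnNge; apply/negP => yx; apply: noX; exists x.
exists x.+1; apply: leq_ltn_trans ky _.
exact: leq_ltn_trans (rank_mono X yx) (rank_lt Xx (ltnSn x)).
Qed.

Lemma rank_onto n : exists x, X x /\ rank X x = n.
Proof.
have ex : exists y, (n < rank X y)%N := rank_unbounded n.+1.
case: (ex_minnP ex) => -[|x] nx minx; first by rewrite /rank in nx.
have rxn : (rank X x <= n)%N by rewrite leqNgt; apply/negP => /minx; rewrite ltnn.
move: nx; rewrite rankS; have [Xx|nXx] := pselect (X x).
  rewrite (asboolT Xx) addn1 ltnS => nrx.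
  by exists x; split=> //; apply/eqP; rewrite eqn_leq rxn.
by rewrite (asboolF nXx) addn0 ltnNge rxn.
Qed.

Lemma rank_fibre_finite n : finite_set [set x | rank X x = n].
Proof.
have [z [Xz rz]] := rank_onto n.
apply: (@bounded_nat_finite _ z.+1) => x /= rx; rewrite ltnS leqNgt; apply/negP.
by move=> /(rank_lt Xz); rewrite rz rx ltnn.
Qed.

End RankInfinite.

Section Pieces.
Variables (M : countType) (I : set (set M)) (T : countType) (p : M -> T).
Hypotheses (HI : is_ideal I) (piece_ideal : forall t, I [set m | p m = t]).
Hypothesis pieces_ideal : forall B : set M,
  (forall t, finite_set [set m | B m /\ p m = t]) -> I B.

Let Pinf := [set t | infinite_set [set m | p m = t]].

Lemma infinite_pieces : infinite_set Pinf.
Proof.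
move=> fP; apply: (ideal_properT HI).
have : [set: M] `<=` (\bigcup_(t in Pinf) [set m | p m = t]) `|` [set m | ~ Pinf (p m)].
  by move=> m _; have [Pm|] := pselect (Pinf (p m)); [left; exists (p m)|right].
move/(ideal_sub HI); apply; apply: (ideal_setU HI).
  by apply: (ideal_bigcup HI fP) => t _; exact: piece_ideal.
apply: pieces_ideal => t; have [Pt|nPt] := pselect (Pinf t).
  by apply: sub_finite_set (finite_set0 M) => m [nP pm]; apply: nP; rewrite pm.
by apply: sub_finite_set (contrapT nPt) => m [].
Qed.

(* Group the pieces by the rank of their code among the codes of the infinite
   pieces, then split each group into infinitely many infinite cells. *)
Lemma BI_below_of_pieces : ideal_below BI I.
Proof.
pose X := (fun t : T => pickle t) @` Pinf.
have Xinf : infinite_set X.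
  apply: contra_not infinite_pieces => fX.
  apply: (inj_sub_finite_set (h := fun t : T => pickle t) _ _ fX) => [t t' _ _|t Pt].
    exact: (pcan_inj pickleK).
  by exists t.
pose grp m := rank X (pickle (p m)).
have grp_ideal n : I [set m | grp m = n].
  have fD : finite_set [set t : T | rank X (pickle t) = n].
    apply: (inj_sub_finite_set (h := fun t : T => pickle t) _ _ (rank_fibre_finite Xinf n)) => //.
    by move=> t t' _ _ /(pcan_inj pickleK).
  apply: (ideal_sub HI) (ideal_bigcup HI fD (fun t _ => piece_ideal t)).
  by move=> m gm; exists (p m).
have grp_inf n : infinite_set [set m | grp m = n].
  have [x [[t Pt <-] rt]] := rank_onto Xinf n.
  by apply: (sub_infinite_set _ Pt) => m pm; rewrite /grp /= pm.
have [e [einj esurj]] := fibre_enum grp_inf.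
pose fst_code (k : nat) := if (unpickle k : option (nat * nat)) is Some c then c.1 else 0%N.
apply: (BI_below_of_cells (d := fun m => (grp m, fst_code (e m))) HI).
- move=> [n t] fS; apply: infinite_nat.
  apply: (inj_sub_finite_set (h := fun b : nat => pickle ((t, b) : nat * nat))
    _ _ (finite_image e fS)) => [b b' _ _ /(pcan_inj pickleK)[]//|b _].
  have [m [gm em]] := esurj n (pickle ((t, b) : nat * nat)).
  by exists m => //; rewrite /= gm em /fst_code pickleK.
- by move=> [n t]; apply: (ideal_sub HI) (grp_ideal n) => m [].
- by move=> n B Bn _; apply: (ideal_sub HI) (grp_ideal n) => m /Bn.
- move=> B Btr; apply: pieces_ideal => t.
  by apply: sub_finite_set (Btr (rank X (pickle t))) => m [Bm pm]; rewrite /= /grp pm.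
Qed.

End Pieces.

Section Columns.
Variables (M : countType) (I : set (set M)) (q : M -> nat * nat).
Hypotheses (HI : is_ideal I) (cell_ideal : forall c, I [set m | q m = c]).
Hypothesis column_ideal : forall i (B : set M), (forall m, B m -> (q m).1 = i) ->
  (forall j, finite_set [set m | B m /\ q m = (i, j)]) -> I B.
Hypothesis columns_ideal : forall B : set M,
  (forall i, finite_set [set m | B m /\ (q m).1 = i]) -> I B.

Definition cell i j := [set m | q m = (i, j)].
Definition big_cells i := [set j | infinite_set (cell i j)].
Definition rich i := infinite_set (big_cells i).

Lemma poor_column_ideal i : ~ rich i -> I [set m | (q m).1 = i].
Proof.
move=> /contrapT fC.
have : [set m | (q m).1 = i] `<=` (\bigcup_(j in big_cells i) cell i j) `|`
    [set m | (q m).1 = i /\ ~ big_cells i (q m).2].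
  move=> m qm; have [Cm|] := pselect (big_cells i (q m).2); last by right.
  by left; exists (q m).2 => //; rewrite /cell /= -qm -surjective_pairing.
move/(ideal_sub HI); apply; apply: (ideal_setU HI).
  by apply: (ideal_bigcup HI fC) => j _; exact: cell_ideal.
apply: (column_ideal (i := i)) => [m []//|j].
have [Cj|/contrapT] := pselect (big_cells i j).
  by apply: sub_finite_set (finite_set0 M) => m [[_ nC] qm]; apply: nC; rewrite qm.
by apply: sub_finite_set => m [_].
Qed.

(* Rich columns are renumbered by rank, each poor column being merged into
   the next rich one; inside a rich column, cells are renumbered likewise. *)
Lemma BI_below_of_rich_columns : infinite_set rich -> ideal_below BI I.
Proof.
move=> Rinf.
pose cell_rank i j := if pselect (rich i) then rank (big_cells i) j else 0%N.
pose d m := (rank rich (q m).1, cell_rank (q m).1 (q m).2).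
have dE m i j : q m = (i, j) -> d m = (rank rich i, cell_rank i j) by rewrite /d => ->.
apply: (BI_below_of_cells (d := d) HI).
- move=> [n t]; have [r [Rr <-]] := rank_onto Rinf n.
  have [j [Cj <-]] := rank_onto Rr t.
  apply: (sub_infinite_set _ Cj) => m qm /=; rewrite (dE _ _ _ qm) /cell_rank.
  by case: pselect.
- move=> [n t].
  have : [set m | d m = (n, t)] `<=` \bigcup_(i in [set i | rank rich i = n])
      (if pselect (rich i) then \bigcup_(j in [set j | rank (big_cells i) j = t]) cell i j
       else [set m | (q m).1 = i]).
    move=> m /=; rewrite (dE m _ _ (surjective_pairing _)) /cell_rank => -[dm1 dm2].
    exists (q m).1 => //; case: pselect dm2 => // r dm2.
    by exists (q m).2 => //; rewrite /cell /= -surjective_pairing.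
  move/(ideal_sub HI); apply; apply: (ideal_bigcup HI (rank_fibre_finite Rinf n)) => i _.
  case: pselect => [r|]; last exact: poor_column_ideal.
  by apply: (ideal_bigcup HI (rank_fibre_finite r t)) => j _; exact: cell_ideal.
- move=> n B Bn Btr.
  have : B `<=` \bigcup_(i in [set i | rank rich i = n]) [set m | B m /\ (q m).1 = i].
    by move=> m Bm; exists (q m).1; rewrite //= -(Bn m Bm) (dE m _ _ (surjective_pairing _)).
  move/(ideal_sub HI); apply; apply: (ideal_bigcup HI (rank_fibre_finite Rinf n)) => i /= ri.
  have [r|nr] := pselect (rich i); last by apply: (ideal_sub HI) (poor_column_ideal nr) => m [].
  apply: (column_ideal (i := i)) => [m []//|j].
  apply: sub_finite_set (Btr (rank (big_cells i) j)) => m [[Bm _] qm]; split=> //.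
  by rewrite (dE _ _ _ qm) ri /cell_rank; case: pselect.
- move=> B Btr; apply: columns_ideal => i.
  apply: sub_finite_set (Btr (rank rich i)) => m [Bm qm]; split=> //.
  by rewrite (dE m _ _ (surjective_pairing _)) qm.
Qed.

(* Cells of rich columns stay pieces; each poor column becomes one piece. *)
Definition piece_of m : nat * nat :=
  if `[< rich (q m).1 >] then ((q m).1, (q m).2.+1) else ((q m).1, 0%N).

Lemma piece_of_fst m : (piece_of m).1 = (q m).1.
Proof. by rewrite /piece_of; case: ifP. Qed.

Lemma piece_ideal c : I [set m | piece_of m = c].
Proof.
case: c => i [|j].
  have [r|nr] := pselect (rich i).
    apply: (ideal_finite HI); rewrite (_ : [set m | _] = set0) ?finite_set0 //.
    apply/seteqP; split=> // m /=; rewrite /piece_of.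
    by case: ifP => [_ []|/asboolP nr [qm1]] //; apply: nr; rewrite qm1.
  by apply: (ideal_sub HI) (poor_column_ideal nr) => m /= pm; rewrite -piece_of_fst pm.
apply: (ideal_sub HI) (cell_ideal (i, j)) => m /=; rewrite /piece_of.
case: ifP => [_ [qm1 qm2]|_ [_ j0]] //.
by rewrite [q m]surjective_pairing qm1 qm2.
Qed.

Lemma pieces_ideal (Rfin : finite_set rich) (B : set M) :
  (forall c, finite_set [set m | B m /\ piece_of m = c]) -> I B.
Proof.
move=> Btr.
have : B `<=` (\bigcup_(i in rich) [set m | B m /\ (q m).1 = i]) `|`
    [set m | B m /\ ~ rich (q m).1].
  by move=> m Bm; have [r|] := pselect (rich (q m).1); [left; exists (q m).1|right].
move/(ideal_sub HI); apply; apply: (ideal_setU HI).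
  apply: (ideal_bigcup HI Rfin) => i ri; apply: (column_ideal (i := i)) => [m []//|j].
  apply: sub_finite_set (Btr (i, j.+1)) => m [[Bm qm1] qm]; split=> //.
  by rewrite /piece_of qm /= (asboolT ri).
apply: columns_ideal => i; apply: sub_finite_set (Btr (i, 0%N)) => m [[Bm nr] qm1].
by split=> //; rewrite /piece_of (asboolF nr) qm1.
Qed.

Lemma BI_below_of_columns : ideal_below BI I.
Proof.
have [Rinf|/contrapT Rfin] := pselect (infinite_set rich).
  exact: BI_below_of_rich_columns.
exact: BI_below_of_pieces HI piece_ideal (pieces_ideal Rfin).
Qed.

End Columns.

(** * Mrowka spaces of countable AD families are in FinBW(I) *)

Lemma least_member_index (A : set (set nat)) (iota : set nat -> nat) :
  exists owner : nat -> nat,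
    (forall k n, owner k = n.+1 -> exists2 a, A a & iota a = n /\ a k) /\
    (forall k a, A a -> a k -> exists n, owner k = n.+1 /\ (n <= iota a)%N).
Proof.
have owner_k k : exists o : nat,
    (forall n, o = n.+1 -> exists2 a, A a & iota a = n /\ a k) /\
    (forall a, A a -> a k -> exists n, o = n.+1 /\ (n <= iota a)%N).
  have [[n [a Aa [ia ak]]]|none] := pselect (exists n, exists2 a, A a & iota a = n /\ a k).
    have ex : exists n, `[< exists2 a, A a & iota a = n /\ a k >].
      by exists n; apply/asboolP; exists a.
    case: (ex_minnP ex) => n0 /asboolP own0 min0; exists n0.+1.
    split=> [n' [<-]//|b Ab bk]; exists n0; split=> //.
    by apply: min0; apply/asboolP; exists b.
  exists 0%N; split=> // b Ab bk; exfalso; apply: none.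
  by exists (iota b), b.
have [owner ownerP] := choice owner_k.
by exists owner; split=> k; [exact: (ownerP k).1|exact: (ownerP k).2].
Qed.

Section MrowkaFinBW.
Variables (M : countType) (I : set (set M)) (A : set (set nat)).
Hypothesis HI : is_ideal I.
Variables (iota : set nat -> nat) (owner : nat -> nat).
Hypothesis iota_inj : {in A &, injective iota}.
Hypothesis owner_mem : forall k n, owner k = n.+1 -> exists2 a, A a & iota a = n /\ a k.
Hypothesis owner_min :
  forall k a, A a -> a k -> exists n, owner k = n.+1 /\ (n <= iota a)%N.

(* Column 0 holds infinity and the naturals outside every member of A; column
   n.+1 holds the member a with iota a = n and the naturals whose least
   owner (w.r.t. iota) is a. *)
Definition mr_code (p : mrowka A) : nat * nat :=
  match p with
  | inl k => (owner k, k.+1)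
  | inr (inl a) => ((iota (val a)).+1, 0%N)
  | inr (inr _) => (0%N, 0%N)
  end.

Lemma mr_code_inj : injective mr_code.
Proof.
move=> [k|[a|[]]] [k'|[b|[]]] //=; try by case.
- by case=> _ ->.
- case=> /iota_inj ab; congr (inr (inl _)); apply: val_inj; apply: ab; exact: mem_set (set_valP _).
Qed.

Variable f : M -> mrowka A.
Hypothesis no_conv : forall B, ~ I B -> forall x, ~ conv_on f B x.

Lemma mr_cell_ideal c : I [set m | mr_code (f m) = c].
Proof.
apply: contrapT => nc; have [m0 qm0] := infinite_setN0 (nonideal_infinite HI nc).
apply: (no_conv nc (x := f m0)); apply: conv_on_ae.
apply: sub_finite_set (finite_set0 M) => m [qm fm]; apply: fm; apply: mr_code_inj.
by rewrite qm qm0.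
Qed.

Lemma mr_column_ideal i (B : set M) : (forall m, B m -> (mr_code (f m)).1 = i) ->
  (forall j, finite_set [set m | B m /\ mr_code (f m) = (i, j)]) -> I B.
Proof.
move=> Bi Btr; apply: contrapT => nB.
have fibre_nat n : finite_set (fibre f B (mr_nat A n)).
  apply: sub_finite_set (Btr n.+1) => m [Bm fm]; split=> //.
  by rewrite fm /= -(Bi m Bm) fm.
case: i Bi Btr => [|i] Bi Btr.
  apply: (no_conv nB (x := mr_inf A)); apply: mr_inf_conv_on => // a.
    by apply: sub_finite_set (finite_set0 M) => m [Bm fm]; have := Bi m Bm; rewrite fm.
  apply: sub_finite_set (finite_set0 M) => m [Bm [n fm an]]; have := Bi m Bm.
  by rewrite fm /=; have [n0 [-> _]] := owner_min (set_valP a) an.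
have [[a Aa ia]|noa] := pselect (exists2 a, A a & iota a = i); last first.
  apply: nB; apply: (ideal_finite HI); apply: sub_finite_set (finite_set0 M) => m Bm.
  have := Bi m Bm; rewrite /=; case: (f m) => [k|[b|[]]] //=.
    by move=> /owner_mem[a Aa [ia _]]; apply: noa; exists a.
  by case=> ib; apply: noa; exists (val b) => //; exact: set_valP.
apply: (no_conv nB (x := mr_pt (SigSub (mem_set Aa) : A))); apply: mr_pt_conv_on => //.
apply: sub_finite_set (finite_set0 M) => m [Bm nfm]; apply: nfm.
have := Bi m Bm; rewrite /=; case: (f m) => [k|[b|[]]] //=.
  move=> /owner_mem[a' Aa' [ia' a'k]]; right; exists k => //=.
  by rewrite -(iota_inj (mem_set Aa') (mem_set Aa) (etrans ia' (esym ia))).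
case=> ib; left; congr (inr (inl _)); apply: val_inj => /=.
exact: iota_inj (mem_set (set_valP b)) (mem_set Aa) (etrans ib (esym ia)).
Qed.

Lemma mr_columns_ideal (B : set M) :
  (forall i, finite_set [set m | B m /\ (mr_code (f m)).1 = i]) -> I B.
Proof.
move=> Btr; apply: contrapT => nB.
apply: (no_conv nB (x := mr_inf A)); apply: mr_inf_conv_on => [n|a|a].
- by apply: sub_finite_set (Btr (owner n)) => m [Bm fm]; rewrite /= fm.
- by apply: sub_finite_set (Btr (iota (val a)).+1) => m [Bm fm]; rewrite /= fm.
have : finite_set (\bigcup_(i in [set i | (i < (iota (val a)).+2)%N])
    [set m | B m /\ (mr_code (f m)).1 = i]).
  by apply: bigcup_finite => //; exact: (@bounded_nat_finite _ (iota (val a)).+2).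
apply: sub_finite_set => m [Bm [n fm an]]; exists (mr_code (f m)).1 => //=.
rewrite fm /=; have [n0 [-> n0a]] := owner_min (set_valP a) an.
by rewrite !ltnS.
Qed.

End MrowkaFinBW.

Theorem FinBW_mrowka (M : countType) (I : set (set M)) (A : set (set nat)) :
  is_ideal I -> AD_family A -> countable A -> unboring I -> FinBW I (mrowka A).
Proof.
move=> HI HA cA unb; split=> [|f]; first exact: mr_hausdorff.
apply: contrapT => nconv; apply: unb.
have [iota iota_inj] := countable_injP _ cA.
have [owner [owner_mem owner_min]] := least_member_index A iota.
have no_conv B : ~ I B -> forall x, ~ conv_on f B x.
  by move=> nB x fBx; apply: nconv; exists B; split=> //; exists x.
apply: (BI_below_of_columns (q := fun m => mr_code iota owner (f m)) HI).
- exact: mr_cell_ideal.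
- exact: mr_column_ideal.
- exact: mr_columns_ideal.
Qed.

Definition pickle_row (n : nat) : set nat := [set pickle ((n, m) : nat * nat) | m in setT].
Definition pickle_rows : set (set nat) := range pickle_row.

Lemma pickle_row_infinite n : infinite_set (pickle_row n).
Proof.
move=> fs; apply: infinite_nat.
apply: (inj_sub_finite_set (h := fun m => pickle ((n, m) : nat * nat)) _ _ fs) => [m m' _ _|m _].
  by move/(pcan_inj pickleK) => [].
by exists m.
Qed.

Lemma pickle_row_disjoint n n' k : pickle_row n k -> pickle_row n' k -> n = n'.
Proof. by move=> [m _ <-] [m' _ /(pcan_inj pickleK)[]]. Qed.

Lemma pickle_row_inj : injective pickle_row.
Proof.
move=> n n' nn'; have rn : pickle_row n (pickle ((n, 0%N) : nat * nat)) by exists 0%N.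
by apply: (pickle_row_disjoint rn); rewrite -nn'.
Qed.

Lemma pickle_rows_AD : AD_family pickle_rows.
Proof.
split=> [_ [n _ <-]|_ _ [n _ <-] [n' _ <-] nn']; first exact: pickle_row_infinite.
apply: sub_finite_set (finite_set0 nat) => k [rk r'k].
by apply: nn'; rewrite (pickle_row_disjoint rk r'k).
Qed.

Lemma pickle_rows_infinite : infinite_set pickle_rows.
Proof.
move=> fs; apply: infinite_nat.
apply: (inj_sub_finite_set (h := pickle_row) _ _ fs) => [m m' _ _|m _].
  exact: pickle_row_inj.
by exists m.
Qed.

Lemma pickle_rows_countable : countable pickle_rows.
Proof. by apply: sub_countable (card_image_le _ _) _; exact: countableP. Qed.

(** * An uncountable Mrowka space in FinBW(I) under CH *)

Lemma countable_infinite_enum (T : Type) (D : set T) : countable D -> infinite_set D ->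
  exists e : nat -> T, [/\ forall n, D (e n), injective e & forall b, D b -> exists n, e n = b].
Proof.
move=> cD Dinf; have /card_set_bijP[f [_ finj fsurj]] := eq_card_nat cD Dinf.
have [e ef] : {e : nat -> T & forall n, D (e n) /\ f (e n) = n}.
  by apply: (@choice _ _ (fun n x => D x /\ f x = n)) => n; have [x] := fsurj n I; exists x.
exists e; split=> [n|m n emn|b Db]; first exact: (ef n).1.
  by rewrite -(ef m).2 -(ef n).2 emn.
by exists (f b); apply: finj; rewrite ?inE //; [exact: (ef _).1|exact: (ef _).2].
Qed.

(* Diagonalise against an enumeration: the n-th chosen point avoids the first
   n + 1 members and is at least n. *)
Lemma AD_countable_extend (A : set (set nat)) : AD_family A -> countable A ->
  infinite_set A -> exists a : set nat, infinite_set a /\ forall b, A b -> finite_set (a `&` b).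
Proof.
move=> HA cA Ainf; have [e [eA einj esurj]] := countable_infinite_enum cA Ainf.
pose U n := \bigcup_(i in [set i | (i <= n)%N]) e i.
have Uc n : infinite_set (~` U n).
  have fI : finite_set (e n.+1 `&` U n).
    have : finite_set (\bigcup_(i in [set i | (i <= n)%N]) (e n.+1 `&` e i)).
      apply: bigcup_finite => [|i /= iN]; first by apply: (@bounded_nat_finite _ n.+1) => i.
      by apply: HA.2 => // /einj ni; move: iN; rewrite -ni ltnn.
    by apply: sub_finite_set => k [ek [i iN eik]]; exists i.
  apply: contra_not (infinite_setD (HA.1 _ (eA n.+1)) fI) => fc.
  by apply: sub_finite_set fc => k [ek nU] Uk; apply: nU.
have [x xP] : {x : nat -> nat & forall n, ~ U n (x n) /\ (n <= x n)%N}.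
  apply: (@choice _ _ (fun n k => ~ U n k /\ (n <= k)%N)) => n.
  apply: contrapT => /forallNP none; apply: (Uc n); apply: (@bounded_nat_finite _ n) => k nk.
  by rewrite ltnNge; apply/negP => nlek; apply: (none k).
exists (range x); split.
  move=> /finite_nat_bounded[K xK]; have := xK (x K) (ex_intro2 _ _ K I erefl).
  by rewrite ltnNge (xP K).2.
move=> b Ab; have [k <-] := esurj b Ab.
apply: sub_finite_set (finite_image x (@bounded_nat_finite _ k (fun i (ik : (i < k)%N) => ik))).
move=> _ [[n _ <-] ekx]; exists n => //=; rewrite ltnNge; apply/negP => kn.
by apply: (xP n).1; exists k.
Qed.

(* A sequence in a Mrowka space, with its points of A replaced by labels:
   [inl n] is the natural n, [inr (inl k)] the point labelled k, and
   [inr (inr tt)] the point at infinity. *)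
Definition pattern (M : Type) := M -> nat + (nat + unit).

(* The pattern c converges on B in every Mrowka space whose AD family
   contains C and labels injectively: c is constant on B, or its values are
   labels taken finitely often (limit: infinity), or its values are naturals
   taken finitely often and almost all in some member of C. *)
Definition captured (M : Type) (c : pattern M) (B : set M) (C : set (set nat)) :=
  [\/ exists p, forall m, B m -> c m = p,
      (forall m, B m -> exists k, c m = inr (inl k)) /\
        (forall k, finite_set [set m | B m /\ c m = inr (inl k)])
    | [/\ forall m, B m -> exists n, c m = inl n,
          forall n, finite_set [set m | B m /\ c m = inl n]
        & exists2 b, C b & finite_set [set m | B m /\ exists2 n, c m = inl n & ~ b n]]].

Definition good_member (M : Type) (I : set (set M)) (A : set (set nat))
    (c : pattern M) (a : set nat) :=
  [/\ infinite_set a, forall b, A b -> finite_set (a `&` b)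
    & exists2 B, ~ I B & captured c B (A `|` [set a])].

Section PatternOf.
Variables (M : Type) (A : set (set nat)) (f : M -> mrowka A) (label : A -> nat).
Hypothesis label_inj : forall m m' b b',
  f m = mr_pt b -> f m' = mr_pt b' -> label b = label b' -> b = b'.

Definition pattern_of : pattern M := fun m =>
  match f m with
  | inl n => inl n
  | inr (inl b) => inr (inl (label b))
  | inr (inr _) => inr (inr tt)
  end.

Lemma pattern_of_inj m m' : pattern_of m = pattern_of m' -> f m = f m'.
Proof.
rewrite /pattern_of; case E: (f m) => [n|[b|[]]]; case E': (f m') => [n'|[b'|[]]] //.
- by case=> ->.
- by case=> /(label_inj E E') ->.
Qed.

Lemma captured_conv_on (B : set M) (C : set (set nat)) :
  C `<=` A -> captured pattern_of B C -> exists x, conv_on f B x.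
Proof.
move=> CA [[p Bp]|[Blab Bfin]|[Bnat Bfin [b Cb Bb]]].
- have [[m1 Bm1]|noB] := pselect (B !=set0).
    exists (f m1); apply: conv_on_ae; apply: sub_finite_set (finite_set0 M) => m [Bm].
    by apply; apply: pattern_of_inj; rewrite (Bp m Bm) (Bp m1 Bm1).
  exists (mr_inf A); apply: conv_on_ae; apply: sub_finite_set (finite_set0 M) => m [Bm _].
  by apply: noB; exists m.
- exists (mr_inf A); apply: mr_inf_conv_on => [n|b|b].
  + apply: sub_finite_set (finite_set0 M) => m [Bm fm].
    by have [k] := Blab m Bm; rewrite /pattern_of /= fm.
  + by apply: sub_finite_set (Bfin (label b)) => m [Bm fm]; rewrite /pattern_of /= fm.
  + apply: sub_finite_set (finite_set0 M) => m [Bm [n fm _]].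
    by have [k] := Blab m Bm; rewrite /pattern_of /= fm.
- exists (mr_pt (SigSub (mem_set (CA b Cb)) : A)); apply: mr_pt_conv_on.
    by move=> n; apply: sub_finite_set (Bfin n) => m [Bm fm]; rewrite /pattern_of /= fm.
  apply: sub_finite_set Bb => m [Bm nfm]; split=> //.
  have [n cn] := Bnat m Bm; exists n => // bn; apply: nfm; right; exists n => //.
  by move: cn; rewrite /pattern_of; case: (f m) => [k [->]|[?|[]]].
Qed.

End PatternOf.

Section GoodMember.
Variables (M : countType) (I : set (set M)) (A : set (set nat)).
Hypotheses (HI : is_ideal I) (HA : AD_family A).
Variables (e : nat -> set nat) (a0 : set nat).
Hypotheses (eA : forall k, A (e k)) (einj : injective e).
Hypotheses (a0inf : infinite_set a0) (a0AD : forall b, A b -> finite_set (a0 `&` b)).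
Variable c : pattern M.

Definition enum_member k : A := SigSub (mem_set (eA k)).

Definition decode (v : nat + (nat + unit)) : mrowka A :=
  match v with
  | inl n => mr_nat A n
  | inr (inl k) => mr_pt (enum_member k)
  | inr (inr _) => mr_inf A
  end.

Lemma good_member_a0 B : ~ I B -> captured c B (A `|` [set a0]) -> good_member I A c a0.
Proof. by move=> nB cB; split=> //; exists B. Qed.

Lemma good_member_of_labels B x : ~ I B ->
  (forall m, B m -> exists k, c m = inr (inl k)) -> conv_on (decode \o c) B x ->
  exists a, good_member I A c a.
Proof.
move=> nB Blab; case: x => [n|[b|[]]] Bx; exists a0.
- exfalso; apply: (nonideal_infinite HI nB); apply: sub_finite_set (conv_on_mr_nat Bx).
  by move=> m Bm; split=> //=; have [k ->] := Blab m Bm.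
- pose E := [set m | B m /\ ~ ((decode \o c) m = mr_pt b \/
    exists2 n, (decode \o c) m = mr_nat A n & val b n)].
  have nBE := nonideal_setD HI (conv_on_mr_pt_cofinite Bx) nB.
  have [m0 [Bm0 nEm0]] := infinite_setN0 (nonideal_infinite HI nBE).
  have cb m : (B `\` E) m -> exists2 k, c m = inr (inl k) & enum_member k = b.
    move=> [Bm nEm]; have [k ck] := Blab m Bm; exists k => //.
    apply: contrapT => kb; apply: nEm; split=> // -[|[n]]; rewrite /= ck //=.
    by move=> /mr_pt_inj.
  apply: (good_member_a0 nBE); apply: Or31; exists (c m0) => m Bm.
  have [k -> kb] := cb m Bm; have [k0 -> k0b] := cb m0 (conj Bm0 nEm0).
  by congr (inr (inl _)); apply: einj; rewrite -[e k]/(val (enum_member k)) kb -k0b.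
- apply: (good_member_a0 nB); apply: Or32; split=> // k.
  apply: sub_finite_set (conv_on_mr_inf_fibre_pt HA Bx (enum_member k)) => m [Bm ck].
  by split=> //=; rewrite ck.
Qed.

Lemma good_member_of_naturals B x : ~ I B ->
  (forall m, B m -> exists n, c m = inl n) -> conv_on (decode \o c) B x ->
  exists a, good_member I A c a.
Proof.
move=> nB Bnat.
have fibre_sub n : [set m | B m /\ c m = inl n] `<=` fibre (decode \o c) B (mr_nat A n).
  by move=> m [Bm cm]; split=> //=; rewrite cm.
case: x => [n|[b|[]]] Bx.
- have nBE := nonideal_setD HI (conv_on_mr_nat Bx) nB.
  exists a0; apply: (good_member_a0 nBE); apply: Or31; exists (inl n) => m [Bm nEm].
  have [k ck] := Bnat m Bm; rewrite ck; congr inl.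
  apply: contrapT => kn; apply: nEm; split=> //.
  by rewrite /= ck => -[].
- exists a0; apply: (good_member_a0 nB); apply: Or33; split=> //.
    by move=> n; apply: sub_finite_set (conv_on_mr_pt_fibre Bx n); exact: fibre_sub.
  exists (val b); first by left; exact: set_valP.
  apply: sub_finite_set (conv_on_mr_pt_cofinite Bx) => m [Bm [n cn nbn]]; split=> //.
  by rewrite /= cn => -[//|[n' [<-]]].
- pose a := [set n | exists2 m, B m & c m = inl n].
  have fibres n : finite_set [set m | B m /\ c m = inl n].
    by apply: sub_finite_set (conv_on_mr_inf_fibre_nat HA Bx n); exact: fibre_sub.
  exists a; split.
  + apply: contra_not (nonideal_infinite HI nB) => fa.
    apply: sub_finite_set (bigcup_finite fa (fun n _ => fibres n)) => m Bm.
    by have [n cn] := Bnat m Bm; exists n; [exists m|].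
  + move=> b Ab; have := conv_on_mr_inf_trace HA Bx (SigSub (mem_set Ab)).
    move=> /(finite_image (fun m => if c m is inl n then n else 0%N)).
    apply: sub_finite_set => n [[m Bm cm] bn]; exists m; last by rewrite cm.
    by split=> //; exists n => //=; rewrite cm.
  + exists B => //; apply: Or33; split=> //; exists a; first by right.
    by apply: sub_finite_set (finite_set0 M) => m [Bm [n cn]]; apply; exists m.
Qed.

End GoodMember.

Lemma good_member_exists (M : countType) (I : set (set M)) (A : set (set nat))
    (c : pattern M) :
  is_ideal I -> unboring I -> AD_family A -> countable A -> infinite_set A ->
  exists a, good_member I A c a.
Proof.
move=> HI unb HA cA Ainf.
have [e [eA einj _]] := countable_infinite_enum cA Ainf.
have [a0 [a0inf a0AD]] := AD_countable_extend HA cA Ainf.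
have [B [nB [x Bx]]] := (FinBW_mrowka HI HA cA unb).2 (decode eA \o c).
pose BN := [set m | B m /\ exists n, c m = inl n].
pose BL := [set m | B m /\ exists k, c m = inr (inl k)].
pose Binf := [set m | B m /\ c m = inr (inr tt)].
have : B `<=` (BN `|` BL) `|` Binf.
  move=> m Bm; case cm: (c m) => [n|[k|[]]]; last by right.
    by left; left; split=> //; exists n.
  by left; right; split=> //; exists k.
move=> /(nonideal_super HI) /(_ nB) /(nonideal_setU HI) [/(nonideal_setU HI) []|nBinf].
- move=> nBN; apply: (good_member_of_naturals (eA := eA) HI HA a0inf a0AD nBN).
    by move=> m [].
  by apply: conv_on_sub Bx => m [].
- move=> nBL; apply: (good_member_of_labels (eA := eA) HI HA einj a0inf a0AD nBL).
    by move=> m [].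
  by apply: conv_on_sub Bx => m [].
- exists a0; apply: (good_member_a0 a0inf a0AD nBinf); apply: Or31.
  by exists (inr (inr tt)) => m [].
Qed.

Section WellOrder.
Variables (T : eqType) (R : rel T).
Hypothesis wR : well_order R.

Lemma well_order_chainT : wo_chain R predT.
Proof. by move=> A _; exact: wR. Qed.

Lemma well_order_antisym : antisymmetric R.
Proof. by move=> x y; apply: (wo_chain_antisymmetric well_order_chainT). Qed.

Lemma well_order_min (S : set T) : S !=set0 -> exists z, S z /\ forall y, S y -> R z y.
Proof.
move=> [x Sx]; have ne : wochoice.nonempty [pred y | `[< S y >]] by exists x; rewrite inE.
have [z [[Sz zmin] _]] := wR ne; rewrite inE in Sz.
by exists z; split=> // y Sy; apply: zmin; rewrite inE.
Qed.

Lemma well_order_trans : transitive R.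
Proof.
move=> y x z xy yz.
have [w [xyz wmin]] := @well_order_min [set u | u = x \/ u = y \/ u = z]
  (ex_intro _ x (or_introl erefl)).
case: xyz => [|[|]] wE; subst w; first by apply: wmin; right; right.
  have xy' : x = y by apply: well_order_antisym; rewrite xy wmin //; left.
  by rewrite xy'.
have yz' : y = z by apply: well_order_antisym; rewrite yz wmin //; right; left.
by rewrite -yz'.
Qed.

Definition wlt x y := R x y /\ x <> y.

Lemma wlt_trans x y z : wlt x y -> wlt y z -> wlt x z.
Proof.
move=> [xy nxy] [yz nyz]; split; first exact: well_order_trans xy yz.
by move=> xz; subst z; apply: nxy; apply: well_order_antisym; rewrite xy yz.
Qed.

Lemma wlt_total x y : x <> y -> wlt x y \/ wlt y x.
Proof.
move=> nxy; have : R x y || R y x := wo_chainW well_order_chainT (erefl true) (erefl true).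
by case/orP=> [xy|yx]; [left|right; split=> // yx'; apply: nxy].
Qed.

Lemma wlt_wf : well_founded wlt.
Proof.
move=> x; apply: contrapT => nAx.
have [z [nAz zmin]] := @well_order_min [set u | ~ Acc wlt u] (ex_intro _ x nAx).
apply: nAz; constructor => y [yz nyz]; apply: contrapT => nAy.
by apply: nyz; apply: well_order_antisym; rewrite yz zmin.
Qed.

End WellOrder.

Lemma set_nat_uncountable : ~ countable [set: set nat].
Proof.
move=> /countable_injP[h hinj].
pose D := [set n | exists X, h X = n /\ ~ X n].
have hD X : h X = h D -> X = D by exact: (hinj X D (mem_set I) (mem_set I)).
have nDhD : ~ D (h D) by move=> DhD; case: (DhD) => X [/hD XD]; rewrite XD; apply.
exact: nDhD (ex_intro _ D (conj erefl nDhD)).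
Qed.

Lemma pattern_uncountable (M : countType) :
  infinite_set [set: M] -> ~ countable [set: pattern M].
Proof.
move=> Minf /countable_injP[h hinj]; apply: set_nat_uncountable.
have /card_set_bijP[e [_ _ esurj]] := eq_card_nat (countableP [set: M]) Minf.
pose indicator X : pattern M := fun m => inl (if pselect (X (e m)) then 1%N else 0%N).
apply/countable_injP; exists (fun X => h (indicator X)) => X Y _ _ hXY.
have /(congr1 (fun c => c _)) XY := hinj _ _ (mem_set I) (mem_set I) hXY.
apply/seteqP; split=> n; have [m _ <-] := esurj n I; have := XY m;
  by rewrite /indicator; case: pselect; case: pselect.
Qed.

Lemma set_nat_onto_pattern (M : countType) :
  exists g : set nat -> pattern M, forall c, exists X, g X = c.
Proof.
pose G (c : pattern M) : set nat :=
  [set pickle ((pickle m, pickle (c m)) : nat * nat) | m in setT].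
have Ginj c c' : G c = G c' -> c = c'.
  move=> cc'; apply: funext => m.
  have : G c' (pickle ((pickle m, pickle (c m)) : nat * nat)) by rewrite -cc'; exists m.
  by move=> [m' _ /(pcan_inj pickleK)[/(pcan_inj pickleK) -> /(pcan_inj pickleK)]].
have [g gG] : {g : set nat -> pattern M & forall X, (exists c, G c = X) -> G (g X) = X}.
  apply: (@choice _ _ (fun X c => (exists c, G c = X) -> G c = X)) => X.
  by have [[c cX]|] := pselect (exists c, G c = X); [exists c|exists (fun _ => inr (inr tt))].
by exists g => c; exists (G c); apply: Ginj; apply: gG; exists c.
Qed.

(* Cut a well-order of set nat at its first element with an uncountable
   initial segment; under CH that segment is equipotent to set nat. *)
Lemma CH_pattern_enum (M : countType) : CH ->
  exists (R : rel (set nat)) (code_of : set nat -> pattern M), well_order R /\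
    forall c, exists w, countable [set v | wlt R v w] /\ code_of w = c.
Proof.
move=> ch; have [R wR] := well_ordering_principle (set nat).
have [g gsurj] := set_nat_onto_pattern M; exists R.
have [segs_cnt|] := pselect (forall w, countable [set v | wlt R v w]).
  by exists g; split=> // c; have [X gX] := gsurj c; exists X.
move=> /existsNP[p0 np0].
have [p [np pmin]] :=
  well_order_min wR (ex_intro (fun p => ~ countable [set v | wlt R v p]) p0 np0).
have seg_cnt v : wlt R v p -> countable [set u | wlt R u v].
  move=> [vp nvp]; apply: contrapT => nv; apply: nvp.
  by apply: (well_order_antisym wR); rewrite vp pmin.
have /card_set_bijP[f [_ _ fsurj]] := ch _ np.
exists (fun w => g (f w)); split=> // c.
have [X gX] := gsurj c; have [w pw fw] := fsurj X I.
by exists w; split; [exact: seg_cnt|rewrite fw].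
Qed.

Section CHConstruction.
Variables (M : countType) (I : set (set M)).
Hypotheses (HI : is_ideal I) (unb : unboring I).
Variables (R : rel (set nat)) (code_of : set nat -> pattern M).
Hypothesis wR : well_order R.
Hypothesis code_ofP :
  forall c, exists w, countable [set v | wlt R v w] /\ code_of w = c.

Local Notation lt := (wlt R).

Definition choose_member (S : set (set nat)) (c : pattern M) : set nat :=
  if pselect (exists a, good_member I S c a) is left ex then projT1 (cid ex) else set0.

Lemma choose_memberP S c :
  (exists a, good_member I S c a) -> good_member I S c (choose_member S c).
Proof. by rewrite /choose_member; case: pselect => // ex _; exact: projT2 (cid ex). Qed.

(* The w-th new member diagonalises against the w-th pattern. *)
Definition member_at : set nat -> set nat :=
  Fix (wlt_wf wR) (fun _ => set nat) (fun w rec =>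
    choose_member (pickle_rows `|` [set b | exists v (vw : lt v w), b = rec v vw])
      (code_of w)).

Definition prefix (w : set nat) := pickle_rows `|` [set member_at v | v in [set v | lt v w]].

Lemma member_atE w : member_at w = choose_member (prefix w) (code_of w).
Proof.
rewrite /member_at Fix_eq => [|x f g fg]; last first.
  by congr choose_member; congr setU; apply/seteqP; split=> b [v [vw ->]];
    exists v, vw; rewrite fg.
congr choose_member; congr setU; apply/seteqP; split=> b.
  by move=> [v [vw ->]]; exists v.
by move=> [v vw <-]; exists v, vw.
Qed.

Let W := [set w | countable [set v | lt v w]].

Lemma prefix_AD (D : set (set nat)) :
  (forall v, D v -> good_member I (prefix v) (code_of v) (member_at v)) ->
  AD_family (pickle_rows `|` [set member_at v | v in D]).
Proof.
move=> Dgood; split=> [b [|[v Dv <-]]|b1 b2 [r1|[v1 D1 <-]] [r2|[v2 D2 <-]] b12].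
- exact: pickle_rows_AD.1.
- by have [] := Dgood v Dv.
- exact: pickle_rows_AD.2.
- by rewrite setIC; have [_ + _] := Dgood v2 D2; apply; left.
- by have [_ + _] := Dgood v1 D1; apply; left.
have [v12|v21] := wlt_total wR (fun v12 : v1 = v2 => b12 (congr1 member_at v12)).
  by rewrite setIC; have [_ + _] := Dgood v2 D2; apply; right; exists v1.
by have [_ + _] := Dgood v1 D1; apply; right; exists v2.
Qed.

Lemma W_lt v w : lt v w -> W w -> W v.
Proof.
by move=> vw; apply: sub_countable; apply: subset_card_le => u uv; exact: wlt_trans uv vw.
Qed.

Lemma member_at_good w : W w -> good_member I (prefix w) (code_of w) (member_at w).
Proof.
move: w; apply: (well_founded_ind (wlt_wf wR)) => w IH Ww; rewrite member_atE.
have prefix_good v : lt v w -> good_member I (prefix v) (code_of v) (member_at v).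
  by move=> vw; apply: IH vw (W_lt vw Ww).
apply/choose_memberP/good_member_exists => //; first exact: prefix_AD.
  apply: countable_setU pickle_rows_countable _.
  exact: sub_countable (card_image_le _ _) Ww.
by apply: contra_not pickle_rows_infinite; apply: sub_finite_set => b rb; left.
Qed.

Definition CH_family := pickle_rows `|` [set member_at w | w in W].

Lemma CH_family_AD : AD_family CH_family.
Proof. exact: prefix_AD member_at_good. Qed.

Lemma CH_family_infinite : infinite_set CH_family.
Proof. by apply: contra_not pickle_rows_infinite; apply: sub_finite_set => b rb; left. Qed.

Lemma member_at_inj : {in W &, injective member_at}.
Proof.
move=> w v /set_mem Ww /set_mem Wv wv; apply: contrapT => nwv.
have [winf wAD _] := member_at_good Ww; have [_ vAD _] := member_at_good Wv.
case: (wlt_total wR nwv) => [wltv|vltw].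
  by apply: winf; rewrite -[member_at w]setIid {1}wv; apply: vAD; right; exists w.
by apply: winf; rewrite -[member_at w]setIid {2}wv; apply: wAD; right; exists v.
Qed.

Lemma CH_family_uncountable : ~ countable CH_family.
Proof.
have Minf : infinite_set [set: M] by move=> /(ideal_finite HI); exact: ideal_properT.
have Wunc : ~ countable W.
  move=> cW; apply: (pattern_uncountable Minf).
  apply: sub_countable (subset_card_le _) (sub_countable (card_image_le code_of W) cW).
  by move=> c _; have [w [Ww <-]] := code_ofP c; exists w.
move=> cA; apply: Wunc; rewrite -(eq_countable (inj_card_eq member_at_inj)).
by apply: sub_countable (subset_card_le _) cA => _ [w Ww <-]; right; exists w.
Qed.

(* Label each point of the family by (the code of) some index it is the value
   at; the pattern of f is then met at some stage w. *)
Lemma CH_family_FinBW : FinBW I (mrowka CH_family).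
Proof.
split=> [|f]; first exact: mr_hausdorff CH_family_AD.
pose label (b : CH_family) : nat :=
  if pselect (exists m, f m = mr_pt b) is left ex then pickle (projT1 (cid ex)) else 0%N.
have label_inj m m' b b' : f m = mr_pt b -> f m' = mr_pt b' -> label b = label b' -> b = b'.
  move=> fm fm'; rewrite /label; case: pselect => [ex|]; last by case; exists m.
  case: pselect => [ex'|]; last by case; exists m'.
  move=> /(pcan_inj pickleK) wit; apply: mr_pt_inj.
  by rewrite -(projT2 (cid ex)) -(projT2 (cid ex')) wit.
have [w [Ww cw]] := code_ofP (pattern_of f label).
have [_ _ [B nB capB]] := member_at_good Ww; rewrite cw in capB.
exists B; split=> //; apply: (captured_conv_on label_inj _ capB).
move=> b [[rb|[v vw <-]]|->]; [by left|right; exists v => //|by right; exists w].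
exact: W_lt vw Ww.
Qed.

End CHConstruction.

Lemma CH_construction (M : countType) (I : set (set M)) :
  is_ideal I -> unboring I -> CH ->
  exists A : set (set nat), infinite_AD A /\ ~ countable [set: mrowka A] /\ FinBW I (mrowka A).
Proof.
move=> HI unb ch; have [R [code_of [wR code_ofP]]] := CH_pattern_enum M ch.
exists (CH_family I code_of wR); split; [split|split].
- exact: CH_family_AD.
- exact: CH_family_infinite.
- exact/mr_uncountable/(CH_family_uncountable HI unb code_ofP).
- exact (CH_family_FinBW HI unb wR code_ofP).
Qed.

Lemma boring_of_not_unboring (M : Type) (I : set (set M)) (X : topologicalType) :
  ~ unboring I -> FinBW I X -> boring_space X.
Proof.
move=> /contrapT BI_I XI; apply: FinBW_BI_boring XI.1 _.
exact: ideal_below_FinBW BI_I XI.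
Qed.

Theorem theorem6p6 (M : countType) (I : set (set M)) (HI : is_ideal I) :
  (unboring I <->
     exists X : topologicalType, hausdorff_space X /\ FinBW I X /\ ~ boring_space X) /\
  (CH ->
     (unboring I <->
        exists A : set (set nat), infinite_AD A /\
          ~ countable [set: mrowka A] /\ FinBW I (mrowka A)) /\
     (unboring I <->
        exists X : topologicalType, ~ countable [set: X] /\
          separable_space X /\ FinBW I X)).
Proof.
split=> [|ch]; first split=> [unb|[X [hX [XI nb]]]].
- exists (mrowka pickle_rows); split; first exact: mr_hausdorff pickle_rows_AD.
  split; first exact: FinBW_mrowka HI pickle_rows_AD pickle_rows_countable unb.
  exact: mr_not_boring pickle_rows_AD pickle_rows_infinite.
- by apply: contrapT => /boring_of_not_unboring /(_ XI).
split; split=> [unb|].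
- exact: CH_construction.
- move=> [A [[HA Ainf] [_ AI]]]; apply: contrapT => /boring_of_not_unboring /(_ AI).
  exact: mr_not_boring.
- have [A [[HA Ainf] [Aunc AI]]] := CH_construction HI unb ch.
  by exists (mrowka A); split=> //; split=> //; exact: mr_separable.
- move=> [X [Xunc [Xsep XI]]]; apply: contrapT => /boring_of_not_unboring /(_ XI) Xb.
  exact/Xunc/(separable_boring_countable XI.1 Xb Xsep).
Qed.
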